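(* Let $p>1$. For $c\ge0$ let $N(c)\ge0$ be defined by $N(c)^2+\frac{2}{p+1}N(c)^{p+1}=c$, and let $L(c)=4\int_0^1\bigl(1-z^2+\frac{2}{p+1}N(c)^{p-1}(1-z^{p+1})\bigr)^{-1/2}dz$ (the minimal period of the solutions of $\ddot y+y+|y|^{p-1}y=0$ with $\dot y^2+y^2+\frac{2}{p+1}|y|^{p+1}=c$, and $L(0)=2\pi$). Then $M=L^{-1}:(0,2\pi]\to[0,\infty)$ is $C^\infty$ on $(0,2\pi)$ and there is a constant $\alpha>0$ such that, as $s\to2\pi-$, $$M(s)=\alpha(2\pi-s)^{\frac{2}{p-1}}(1+O(2\pi-s)),\qquad \sqrt{M(s)}=\sqrt\alpha(2\pi-s)^{\frac1{p-1}}(1+O(2\pi-s)),$$ $$M'(s)=-\tfrac{2\alpha}{p-1}(2\pi-s)^{\frac{3-p}{p-1}}(1+O(2\pi-s)),\qquad (\sqrt M)'(s)=-\tfrac{\sqrt\alpha}{p-1}(2\pi-s)^{\frac{2-p}{p-1}}(1+O(2\pi-s)),$$ $$M''(s)=\tfrac{2\alpha(3-p)}{(p-1)^2}(2\pi-s)^{\frac{4-2p}{p-1}}(1+O(2\pi-s)),\qquad (\sqrt M)''(s)=\tfrac{\sqrt\alpha(2-p)}{(p-1)^2}(2\pi-s)^{\frac{3-2p}{p-1}}(1+O(2\pi-s)).$$ *)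

From Stdlib Require Import Reals.
From Coquelicot Require Import Coquelicot.
Open Scope R_scope.

(* real power x^y for x >= 0 (convention 0^y = 0, used only with y > 0
   when the base can vanish) *)
Definition rpow (x y : R) : R := if Rlt_dec 0 x then Rpower x y else 0.

Definition period_integrand (p n z : R) : R :=
  rpow (1 - z ^ 2 + 2 / (p + 1) * rpow n (p - 1) * (1 - rpow z (p + 1))) (-1/2).

Definition period (p : R) (N : R -> R) (c : R) : R :=
  4 * RInt_gen (period_integrand p (N c)) (at_point 0) (at_left 1).

(* f(s) = k (2π - s)^a (1 + O(2π - s)) as s -> 2π-, read as
   |f(s) - k t^a| <= C t * t^a  with t = 2π - s, for s close to 2π from below *)
Definition asympt_left_2pi (f : R -> R) (k a : R) : Prop :=
  exists C delta : R, 0 < delta /\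
    forall s, 2 * PI - delta < s < 2 * PI ->
      Rabs (f s - k * rpow (2 * PI - s) a) <= C * (2 * PI - s) * rpow (2 * PI - s) a.

(* Substituting z = 1 - u^2 turns the period into the proper integral
   Lambda 0 e = 4 * int_0^1 2 D(e,u)^(-1/2) du, with e = N(c)^(p-1) and D affine in e,
   D >= 1.  Differentiating under the integral sign, Lambda 0 is smooth with derivative
   Lambda 1 < 0, Lambda 0 0 = 2π and Lambda 0 e -> 0, so L is a bijection onto (0, 2π] and
   E = (Lambda 0)^(-1) is smooth with E' = 1 / Lambda 1 (E).  As
   Lambda 0 e = 2π - k e + O(e^2) with k = - Lambda 1 0 > 0, E(s) = (2π - s)/k (1 + O(2π - s)).
   Finally M = E^(2/(p-1)) (1 + κ E) and sqrt M = E^(1/(p-1)) sqrt (1 + κ E) with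
   κ = 2/(p+1); differentiating these twice using E' = 1 / Lambda 1 (E) gives the
   expansions, with alpha = k^(-2/(p-1)). *)

From Stdlib Require Import Reals Lra Lia Psatz.
From Coquelicot Require Import Coquelicot.
Open Scope R_scope.

Lemma Rpower_pos (x y : R) : 0 < Rpower x y.
Proof. apply exp_pos. Qed.

Lemma Rpower_1_l (y : R) : Rpower 1 y = 1.
Proof. unfold Rpower. rewrite ln_1, Rmult_0_r. apply exp_0. Qed.

Lemma Rpower_2 (x : R) : 0 < x -> Rpower x 2 = x ^ 2.
Proof. intros Hx. rewrite <- Rpower_pow by exact Hx. f_equal. Qed.

Lemma Rpower_mhalf (x : R) : 0 < x -> Rpower x (-1/2) = / sqrt x.
Proof.
  intros Hx. replace (-1/2) with (- (/2)) by field. rewrite Rpower_Ropp, Rpower_sqrt; auto.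
Qed.

Lemma sqrt_Rpower (x c : R) : 0 < x -> sqrt (Rpower x c) = Rpower x (c / 2).
Proof.
  intros Hx. rewrite <- Rpower_sqrt by apply Rpower_pos. rewrite Rpower_mult. f_equal.
Qed.

Lemma Rpower_pred (x c : R) : 0 < x -> Rpower x c = Rpower x (c - 1) * x.
Proof. intros Hx. rewrite <- (Rpower_1 x) at 3 by lra. rewrite <- Rpower_plus. f_equal. ring. Qed.

Lemma is_derive_Rpower (r x : R) : 0 < x ->
  is_derive (fun y => Rpower y r) x (r * Rpower x (r - 1)).
Proof. intros Hx. apply is_derive_Reals. now apply derivable_pt_lim_power. Qed.

Lemma continuity_pt_Rpower (r x : R) : 0 < x -> continuity_pt (fun y => Rpower y r) x.
Proof.
  intros Hx. apply continuity_pt_filterlim.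
  apply (ex_derive_continuous (K:=R_AbsRing) (V:=R_NormedModule) (fun y => Rpower y r)).
  eexists. now apply is_derive_Rpower.
Qed.

Lemma exp_le (x y : R) : x <= y -> exp x <= exp y.
Proof. intros [H| ->]; [left; now apply exp_increasing | right; reflexivity]. Qed.

Lemma Rpower_le_exp_le1 (x y z : R) : 0 < x <= 1 -> y <= z -> Rpower x z <= Rpower x y.
Proof.
  intros Hx Hyz. unfold Rpower. apply exp_le.
  assert (ln x <= 0) by (rewrite <- ln_1; apply ln_le; lra).
  nra.
Qed.

Lemma Rpower_le_self (z q : R) : 0 < z <= 1 -> 1 <= q -> Rpower z q <= z.
Proof. intros Hz Hq. rewrite <- (Rpower_1 z) at 2 by lra. apply Rpower_le_exp_le1; lra. Qed.

Lemma Rpower_le_base_nonpos (r x y : R) : r <= 0 -> 0 < x <= y -> Rpower y r <= Rpower x r.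
Proof.
  intros Hr Hxy. replace r with (- (- r)) by ring. rewrite !(Rpower_Ropp _ (- r)).
  apply Rinv_le_contravar. apply Rpower_pos. apply Rle_Rpower_l; lra.
Qed.

Lemma Rpower_nonpos_le1 (r x : R) : r <= 0 -> 1 <= x -> Rpower x r <= 1.
Proof. intros Hr Hx. rewrite <- (Rpower_O x) by lra. apply Rle_Rpower; lra. Qed.

Lemma continuity_pt_intro (f : R -> R) (x : R) :
  (forall eps, 0 < eps -> exists d, 0 < d /\ forall y, Rabs (y - x) < d -> Rabs (f y - f x) < eps) ->
  continuity_pt f x.
Proof.
  intros H eps Heps. destruct (H eps Heps) as [d [Hd Hy]].
  exists d. split; [lra|]. intros y [_ Hy']. now apply Hy.
Qed.

Lemma rpow_Rpower (x y : R) : 0 < x -> rpow x y = Rpower x y.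
Proof. intros H. unfold rpow. destruct (Rlt_dec 0 x); [reflexivity | lra]. Qed.

Lemma rpow_le0 (x y : R) : x <= 0 -> rpow x y = 0.
Proof. intros H. unfold rpow. destruct (Rlt_dec 0 x); [lra | reflexivity]. Qed.

Lemma rpow_ge0 (x y : R) : 0 <= rpow x y.
Proof. unfold rpow. destruct (Rlt_dec 0 x); [left; apply Rpower_pos | lra]. Qed.

Lemma rpow_1 (x : R) : 0 <= x -> rpow x 1 = x.
Proof.
  intros [Hx|<-]; [rewrite rpow_Rpower by exact Hx; now apply Rpower_1 | now apply rpow_le0].
Qed.

Lemma rpow_rpow (x a b : R) : 0 <= x -> 0 < a -> rpow (rpow x a) b = rpow x (a * b).
Proof.
  intros [Hx|<-] Ha.
  - rewrite (rpow_Rpower x a), !rpow_Rpower by (auto; apply Rpower_pos). apply Rpower_mult.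
  - rewrite !(rpow_le0 0) by lra. reflexivity.
Qed.

Lemma rpow_rpow_inv (x a b : R) : 0 <= x -> 0 < a -> a * b = 1 -> rpow (rpow x a) b = x.
Proof. intros Hx Ha Hab. rewrite rpow_rpow, Hab by auto. now apply rpow_1. Qed.

Lemma rpow_le_abs (z q : R) : 1 <= q -> Rabs z <= 1 -> rpow z q <= Rabs z.
Proof.
  intros Hq Hz. destruct (Rle_dec z 0).
  - rewrite rpow_le0 by lra. apply Rabs_pos.
  - rewrite rpow_Rpower, Rabs_right in * by lra. apply Rpower_le_self; lra.
Qed.

Lemma continuity_pt_rpow_pos (r x : R) : 0 < x -> continuity_pt (fun y => rpow y r) x.
Proof.
  intros Hx. apply (continuity_pt_locally_ext (fun y => Rpower y r) _ x x Hx).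
  - intros y Hy. unfold Rdist in Hy. apply Rabs_lt_between' in Hy.
    symmetry. apply rpow_Rpower. lra.
  - now apply continuity_pt_Rpower.
Qed.

Lemma continuity_pt_rpow (z q : R) : 1 <= q -> 0 <= z -> continuity_pt (fun y => rpow y q) z.
Proof.
  intros Hq [Hz|<-]; [now apply continuity_pt_rpow_pos|].
  apply continuity_pt_intro. intros eps Heps. exists (Rmin 1 eps).
  split; [apply Rmin_pos; lra|].
  intros y Hy. rewrite Rminus_0_r in Hy. rewrite (rpow_le0 0), Rminus_0_r by lra.
  pose proof (Rmin_l 1 eps). pose proof (Rmin_r 1 eps).
  pose proof (rpow_le_abs y q Hq ltac:(lra)). pose proof (rpow_ge0 y q).
  rewrite Rabs_right; lra.
Qed.

Lemma locally_Rabs (x : R) (P : R -> Prop) (d : R) : 0 < d ->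
  (forall y, Rabs (y - x) < d -> P y) -> locally x P.
Proof. intros Hd H. exists (mkposreal d Hd). intros y Hy. now apply H. Qed.

Lemma is_derive_val_eq (f : R -> R) (x l l' : R) : is_derive f x l -> l = l' -> is_derive f x l'.
Proof. now intros H <-. Qed.

Lemma is_derive_Rmult (f h : R -> R) (x df dh : R) : is_derive f x df -> is_derive h x dh ->
  is_derive (fun y => f y * h y) x (df * h x + f x * dh).
Proof. intros Hf Hh. exact (is_derive_mult f h x df dh Hf Hh Rmult_comm). Qed.

Lemma is_derive_Rplus (f h : R -> R) (x df dh : R) : is_derive f x df -> is_derive h x dh ->
  is_derive (fun y => f y + h y) x (df + dh).
Proof. intros Hf Hh. exact (is_derive_plus f h x df dh Hf Hh). Qed.

Lemma is_derive_Rcomp (f h : R -> R) (x df dh : R) : is_derive f (h x) df -> is_derive h x dh ->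
  is_derive (fun y => f (h y)) x (df * dh).
Proof.
  intros Hf Hh. eapply is_derive_val_eq; [exact (is_derive_comp f h x df dh Hf Hh)|].
  unfold scal; simpl; unfold mult; simpl. ring.
Qed.

Lemma Rinv_close (Q L eps : R) : L <> 0 -> 0 < eps ->
  Rabs (Q - L) < Rmin (Rabs L / 2) (eps * Rabs L * Rabs L / 2) -> Rabs (/ Q - / L) < eps.
Proof.
  intros HL Heps HQL. set (c := Rabs L) in *.
  assert (Hc : 0 < c) by (apply Rabs_pos_lt; auto).
  pose proof (Rmin_l (c / 2) (eps * c * c / 2)). pose proof (Rmin_r (c / 2) (eps * c * c / 2)).
  assert (HQ : c / 2 < Rabs Q).
  { pose proof (Rabs_triang_inv L Q). rewrite Rabs_minus_sym in HQL. unfold c in *. lra. }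
  assert (HQ0 : Q <> 0) by (intros E0; rewrite E0, Rabs_R0 in HQ; lra).
  replace (/ Q - / L) with ((L - Q) / (Q * L)) by (field; auto).
  unfold Rdiv. rewrite Rabs_mult, Rabs_inv, Rabs_mult, Rabs_minus_sym. fold c.
  apply (Rmult_lt_reg_r (Rabs Q * c)); [nra|].
  rewrite Rmult_assoc, Rinv_l by nra.
  assert (0 < eps * c * (Rabs Q - c / 2)) by (apply Rmult_lt_0_compat; [apply Rmult_lt_0_compat|]; lra).
  nra.
Qed.

Section DecreasingInverse.
Variables (L E : R -> R) (lo hi : R).
Hypothesis LE_id : forall s, lo < s < hi -> L (E s) = s /\ 0 < E s.
Hypothesis L_decr : forall x y, 0 <= x < y -> L y < L x.

Lemma decreasing_inverse_continuous s : lo < s < hi ->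
  forall eta, 0 < eta -> exists d, 0 < d /\
    forall s', Rabs (s' - s) < d -> Rabs (E s' - E s) < eta.
Proof.
  intros Hs eta Heta. destruct (LE_id s Hs) as [HLs He].
  set (e := E s) in *. set (et := Rmin eta (e / 2)).
  assert (Het : 0 < et) by (apply Rmin_pos; lra).
  assert (Het1 : et <= eta) by apply Rmin_l. assert (Het2 : et <= e / 2) by apply Rmin_r.
  assert (H1 : L (e + et) < s) by (rewrite <- HLs; apply L_decr; lra).
  assert (H2 : s < L (e - et)) by (rewrite <- HLs at 1; apply L_decr; lra).
  set (d1 := Rmin (s - L (e + et)) (L (e - et) - s)).
  set (d2 := Rmin (s - lo) (hi - s)).
  exists (Rmin d1 d2). split. { unfold d1, d2. repeat apply Rmin_pos; lra. }
  intros s' Hs'. apply Rabs_lt_between' in Hs'.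
  pose proof (Rmin_l d1 d2). pose proof (Rmin_r d1 d2).
  pose proof (Rmin_l (s - L (e + et)) (L (e - et) - s)).
  pose proof (Rmin_r (s - L (e + et)) (L (e - et) - s)).
  pose proof (Rmin_l (s - lo) (hi - s)). pose proof (Rmin_r (s - lo) (hi - s)).
  destruct (LE_id s' ltac:(unfold d1, d2 in *; lra)) as [HL' He'].
  apply Rabs_lt_between'. fold e. unfold d1, d2 in *. split.
  - destruct (Rle_lt_dec (E s') (e - et)) as [[Hlt|Heq]|Hgt]; [|rewrite Heq in HL'; lra|lra].
    assert (L (e - et) < L (E s')) by (apply L_decr; lra). lra.
  - destruct (Rle_lt_dec (e + et) (E s')) as [[Hlt|Heq]|Hgt]; [|rewrite <- Heq in HL'; lra|lra].
    assert (L (E s') < L (e + et)) by (apply L_decr; lra). lra.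
Qed.

Lemma is_derive_decreasing_inverse s L' : lo < s < hi -> is_derive L (E s) L' -> L' <> 0 ->
  is_derive E s (/ L').
Proof.
  intros Hs HD HL'. apply is_derive_Reals in HD. apply is_derive_Reals.
  destruct (LE_id s Hs) as [HLs _].
  intros eps Heps. set (c := Rabs L').
  assert (Hc : 0 < c) by (apply Rabs_pos_lt; auto).
  set (eps' := Rmin (c / 2) (eps * c * c / 2)).
  assert (Heps' : 0 < eps')
    by (apply Rmin_pos; [lra | unfold Rdiv; repeat apply Rmult_lt_0_compat; lra]).
  destruct (HD eps' Heps') as [d' Hd'].
  destruct (decreasing_inverse_continuous s Hs d' (cond_pos d')) as [d1 [Hd1 Hc1]].
  set (d := Rmin d1 (Rmin (s - lo) (hi - s))).
  assert (Hd : 0 < d) by (repeat apply Rmin_pos; lra).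
  exists (mkposreal _ Hd). intros h Hh0 Hh. simpl in Hh.
  pose proof (Rmin_l d1 (Rmin (s - lo) (hi - s))). pose proof (Rmin_r d1 (Rmin (s - lo) (hi - s))).
  pose proof (Rmin_l (s - lo) (hi - s)). pose proof (Rmin_r (s - lo) (hi - s)).
  assert (Hsh : lo < s + h < hi) by (apply Rabs_def2 in Hh; unfold d in *; lra).
  destruct (LE_id (s + h) Hsh) as [HLh _].
  set (k := E (s + h) - E s).
  assert (Hk : Rabs k < d') by (apply Hc1; replace (s + h - s) with h by ring; unfold d in *; lra).
  assert (Hk0 : k <> 0).
  { intros Hk0. assert (Heq : E (s + h) = E s) by (unfold k in Hk0; lra).
    apply Hh0. rewrite Heq in HLh. lra. }
  specialize (Hd' k Hk0 Hk). replace (E s + k) with (E (s + h)) in Hd' by (unfold k; ring).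
  rewrite HLh, HLs in Hd'. replace (s + h - s) with h in Hd' by ring.
  replace (k / h) with (/ (h / k)) by (field; auto).
  now apply Rinv_close.
Qed.

End DecreasingInverse.

Lemma Derive_n_Derive (f : R -> R) (n : nat) (x : R) :
  Derive_n (Derive f) n x = Derive_n f (S n) x.
Proof. replace (S n) with (n + 1)%nat by lia. now rewrite <- Derive_n_comp. Qed.

Lemma ex_derive_n_S_Derive (f : R -> R) (n : nat) (x : R) :
  ex_derive f x -> ex_derive_n (Derive f) n x -> ex_derive_n f (S n) x.
Proof.
  intros H1 H2. destruct n as [|n]; [exact H1|].
  apply (ex_derive_ext (Derive_n (Derive f) n)); [apply Derive_n_Derive | exact H2].
Qed.

Lemma ex_derive_n_Derive (f : R -> R) (n : nat) (x : R) :
  ex_derive_n f (S n) x -> ex_derive_n (Derive f) n x.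
Proof.
  intros H. destruct n as [|n]; [exact I|].
  apply (ex_derive_ext (Derive_n f (S n))); [|exact H].
  intros t. symmetry. apply Derive_n_Derive.
Qed.

Definition Cn_on (U : R -> Prop) (n : nat) (f : R -> R) :=
  forall k, (k <= n)%nat -> forall x, U x -> ex_derive_n f k x.

Definition smooth_on (U : R -> Prop) (f : R -> R) := forall n, Cn_on U n f.

Lemma Cn_on_0 (U : R -> Prop) (f : R -> R) : Cn_on U 0 f.
Proof. intros k Hk x _. replace k with 0%nat by lia. exact I. Qed.

Lemma smooth_on_sub (U U' : R -> Prop) (f : R -> R) :
  (forall x, U' x -> U x) -> smooth_on U f -> smooth_on U' f.
Proof. intros H Hf n k Hk x Hx. apply (Hf n); auto. Qed.

Section OpenSet.
Variable U : R -> Prop.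
Hypothesis U_open : open U.

Lemma locally_open x (P : R -> Prop) : U x -> (forall y, U y -> P y) -> locally x P.
Proof. intros Hx HP. apply (filter_imp U); [exact HP | now apply U_open]. Qed.

Lemma Cn_on_S n (f g : R -> R) :
  (forall x, U x -> is_derive f x (g x)) -> Cn_on U n g -> Cn_on U (S n) f.
Proof.
  intros Hd Hg [|k] Hk x Hx; [exact I|].
  apply ex_derive_n_S_Derive; [eexists; eauto|].
  apply (ex_derive_n_ext_loc g).
  - apply locally_open; [exact Hx|]. intros y Hy. symmetry. apply is_derive_unique. auto.
  - apply Hg; auto. lia.
Qed.

Lemma Cn_on_pred n (f : R -> R) : Cn_on U (S n) f -> Cn_on U n f.
Proof. intros H k Hk. apply H. lia. Qed.

Lemma Cn_on_Derive n (f : R -> R) : Cn_on U (S n) f -> Cn_on U n (Derive f).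
Proof. intros H k Hk x Hx. apply ex_derive_n_Derive, H; auto. lia. Qed.

Lemma Cn_on_ex_derive n (f : R -> R) : Cn_on U (S n) f -> forall x, U x -> ex_derive f x.
Proof. intros H x Hx. apply (H 1%nat); auto. lia. Qed.

Lemma Cn_on_plus n (f g : R -> R) : Cn_on U n f -> Cn_on U n g -> Cn_on U n (fun x => f x + g x).
Proof.
  intros Hf Hg k Hk x Hx.
  apply ex_derive_n_plus; apply locally_open; auto; intros y Hy j Hj;
    [apply Hf | apply Hg]; auto; lia.
Qed.

Lemma Cn_on_scal n (a : R) (f : R -> R) : Cn_on U n f -> Cn_on U n (fun x => a * f x).
Proof. intros Hf k Hk x Hx. apply ex_derive_n_scal_l. apply Hf; auto. Qed.

Lemma Cn_on_mult n : forall f g : R -> R,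
  Cn_on U n f -> Cn_on U n g -> Cn_on U n (fun x => f x * g x).
Proof.
  induction n as [|n IH]; intros f g Hf Hg; [apply Cn_on_0|].
  apply (Cn_on_S n _ (fun x => Derive f x * g x + f x * Derive g x)).
  - intros x Hx.
    destruct (Cn_on_ex_derive n f Hf x Hx) as [df Hdf].
    destruct (Cn_on_ex_derive n g Hg x Hx) as [dg Hdg].
    rewrite (is_derive_unique f x df Hdf), (is_derive_unique g x dg Hdg).
    exact (is_derive_mult f g x df dg Hdf Hdg Rmult_comm).
  - apply Cn_on_plus; apply IH.
    + now apply Cn_on_Derive.
    + now apply Cn_on_pred.
    + now apply Cn_on_pred.
    + now apply Cn_on_Derive.
Qed.

Lemma Cn_on_inv n (f : R -> R) : (forall x, U x -> f x <> 0) ->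
  Cn_on U n f -> Cn_on U n (fun x => / f x).
Proof.
  intros Hnz. induction n as [|n IH]; intros Hf; [apply Cn_on_0|].
  apply (Cn_on_S n _ (fun x => (-1) * (Derive f x * (/ f x * / f x)))).
  - intros x Hx. destruct (Cn_on_ex_derive n f Hf x Hx) as [df Hdf].
    rewrite (is_derive_unique f x df Hdf).
    replace ((-1) * (df * (/ f x * / f x))) with (- df / f x ^ 2) by (field; auto).
    exact (is_derive_inv f x df Hdf (Hnz x Hx)).
  - apply Cn_on_scal, Cn_on_mult; [now apply Cn_on_Derive|].
    apply Cn_on_mult; apply IH; now apply Cn_on_pred.
Qed.

Lemma smooth_on_derive_chain (F : nat -> R -> R) :
  (forall m x, U x -> is_derive (F m) x (F (S m) x)) -> forall m, smooth_on U (F m).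
Proof.
  intros HF m n. revert m. induction n as [|n IH]; intros m; [apply Cn_on_0|].
  apply (Cn_on_S n _ (F (S m))); auto.
Qed.

Lemma smooth_on_ext (f g : R -> R) : (forall x, U x -> f x = g x) ->
  smooth_on U f -> smooth_on U g.
Proof.
  intros Hfg Hf n k Hk x Hx. apply (ex_derive_n_ext_loc f).
  - now apply locally_open.
  - now apply (Hf n).
Qed.

End OpenSet.

Fixpoint falling (c : R) (n : nat) : R :=
  match n with O => 1 | S m => falling c m * (c - INR m) end.

Lemma smooth_on_Rpower (c : R) : smooth_on (fun e => 0 < e) (fun e => Rpower e c).
Proof.
  apply (smooth_on_ext _ (open_gt 0) (fun e => falling c 0 * Rpower e (c - INR 0)));
    [intros x _; simpl; now rewrite Rminus_0_r, Rmult_1_l|].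
  apply (smooth_on_derive_chain _ (open_gt 0) (fun m e => falling c m * Rpower e (c - INR m))).
  intros m x Hx. eapply is_derive_val_eq; [apply is_derive_scal, is_derive_Rpower, Hx|].
  rewrite S_INR. replace (c - INR m - 1) with (c - (INR m + 1)) by ring.
  simpl falling. ring.
Qed.

Section ComposeInverse.
Variables (U W : R -> Prop) (E L1 : R -> R).
Hypothesis U_open : open U.
Hypothesis W_open : open W.
Hypothesis E_maps : forall x, U x -> W (E x).
Hypothesis L1_smooth : smooth_on W L1.
Hypothesis L1_neq0 : forall e, W e -> L1 e <> 0.
Hypothesis E_derive : forall x, U x -> is_derive E x (/ L1 (E x)).

(* (h o E)' = (h' / L1) o E: induct on the order, replacing h by h' / L1. *)
Lemma smooth_on_comp_inverse (h : R -> R) : smooth_on W h -> smooth_on U (fun x => h (E x)).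
Proof.
  intros Hh n. revert h Hh. induction n as [|n IH]; intros h Hh; [apply Cn_on_0|].
  apply (Cn_on_S U U_open n _ (fun x => (fun e => Derive h e * / L1 e) (E x))).
  - intros x Hx.
    destruct (Cn_on_ex_derive W 0 h (Hh 1%nat) (E x) (E_maps x Hx)) as [dh Hdh].
    rewrite (is_derive_unique h (E x) dh Hdh).
    pose proof (is_derive_comp h E x dh _ Hdh (E_derive x Hx)) as Hcomp.
    replace (dh * / L1 (E x)) with (scal (/ L1 (E x)) dh); [exact Hcomp|].
    unfold scal; simpl; unfold mult; simpl. ring.
  - apply (IH (fun e => Derive h e * / L1 e)). intros m. apply (Cn_on_mult W W_open).
    + apply (Cn_on_Derive W), Hh.
    + apply (Cn_on_inv W W_open m L1 L1_neq0), L1_smooth.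
Qed.

End ComposeInverse.

Lemma ln_abs_le_1 (c : R) : 1/2 <= c <= 3/2 -> Rabs (ln c) <= 1.
Proof.
  intros Hc. apply Rabs_le. split.
  - pose proof (exp_ineq1_le (ln (/ c))) as H.
    rewrite exp_ln in H by (apply Rinv_0_lt_compat; lra). rewrite ln_Rinv in H by lra.
    assert (/ c <= 2) by (rewrite <- (Rinv_inv 2); apply Rinv_le_contravar; lra). lra.
  - pose proof (exp_ineq1_le (ln c)) as H. rewrite exp_ln in H by lra. lra.
Qed.

Lemma Rpower_1_plus_bound (g r : R) : Rabs r <= 1/2 ->
  Rabs (Rpower (1 + r) g - 1) <= Rabs g * exp (Rabs (g - 1)) * Rabs r.
Proof.
  intros Hr. apply Rabs_le_between in Hr.
  destruct (Req_dec r 0) as [->|Hr0].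
  { rewrite Rplus_0_r, Rpower_1_l, Rminus_eq_0, !Rabs_R0, Rmult_0_r. lra. }
  destruct (MVT_gen (fun y => Rpower y g) 1 (1 + r) (fun y => g * Rpower y (g - 1)))
    as [c [Hc Heq]].
  - intros x Hx. apply is_derive_Rpower. unfold Rmin, Rmax in Hx; destruct (Rle_dec 1 (1 + r)); lra.
  - intros x Hx. apply continuity_pt_Rpower.
    unfold Rmin, Rmax in Hx; destruct (Rle_dec 1 (1 + r)); lra.
  - rewrite Rpower_1_l in Heq. rewrite Heq. replace (1 + r - 1) with r by ring.
    assert (Hc' : 1/2 <= c <= 3/2) by (unfold Rmin, Rmax in Hc; destruct (Rle_dec 1 (1 + r)); lra).
    assert (Hpow : Rpower c (g - 1) <= exp (Rabs (g - 1))).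
    { unfold Rpower. apply exp_le. pose proof (ln_abs_le_1 c Hc').
      pose proof (Rle_abs ((g - 1) * ln c)). rewrite Rabs_mult in *.
      pose proof (Rabs_pos (g - 1)). nra. }
    pose proof (Rpower_pos c (g - 1)).
    rewrite !Rabs_mult, (Rabs_right (Rpower c (g - 1))) by lra.
    apply Rmult_le_compat_r; [apply Rabs_pos|]. apply Rmult_le_compat_l; [apply Rabs_pos | lra].
Qed.

(* [asympt_left_2pi] normalised to C >= 0 and t = 2π - s < 1, which makes it stable
   under sums, products and real powers. *)
Definition asym_2pi (F : R -> R) (K a : R) : Prop :=
  exists C d, 0 <= C /\ 0 < d /\ d <= 1 /\
    forall s, 2 * PI - d < s < 2 * PI ->
      Rabs (F s - K * Rpower (2 * PI - s) a) <= C * (2 * PI - s) * Rpower (2 * PI - s) a.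

Lemma asympt_left_2pi_asym_2pi (F : R -> R) (K a : R) :
  asym_2pi F K a -> asympt_left_2pi F K a.
Proof.
  intros [C [d [HC [Hd [Hd1 H]]]]]. exists C, d. split; [exact Hd|].
  intros s Hs. rewrite rpow_Rpower by lra. auto.
Qed.

Lemma asym_2pi_eq (F : R -> R) (K a K' a' : R) :
  asym_2pi F K a -> K = K' -> a = a' -> asym_2pi F K' a'.
Proof. now intros H -> ->. Qed.

Lemma asym_2pi_ext (F G : R -> R) (K a : R) :
  (forall s, 0 < s < 2 * PI -> F s = G s) -> asym_2pi F K a -> asym_2pi G K a.
Proof.
  intros Hfg [C [d [HC [Hd [Hd1 H]]]]]. exists C, d. repeat split; auto.
  intros s Hs. pose proof PI2_3_2. rewrite <- Hfg by lra. auto.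
Qed.

Lemma asym_2pi_plus (F G : R -> R) (K1 K2 a : R) :
  asym_2pi F K1 a -> asym_2pi G K2 a -> asym_2pi (fun s => F s + G s) (K1 + K2) a.
Proof.
  intros [C1 [d1 [HC1 [Hd1 [Hd1' H1]]]]] [C2 [d2 [HC2 [Hd2 [Hd2' H2]]]]].
  exists (C1 + C2), (Rmin d1 d2).
  pose proof (Rmin_l d1 d2). pose proof (Rmin_r d1 d2).
  split; [lra|]. split; [now apply Rmin_pos|]. split; [lra|].
  intros s Hs. specialize (H1 s ltac:(lra)). specialize (H2 s ltac:(lra)).
  replace (F s + G s - (K1 + K2) * Rpower (2 * PI - s) a) with
    ((F s - K1 * Rpower (2 * PI - s) a) + (G s - K2 * Rpower (2 * PI - s) a)) by ring.
  eapply Rle_trans; [apply Rabs_triang | lra].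
Qed.

Lemma asym_2pi_scal (F : R -> R) (K a c : R) :
  asym_2pi F K a -> asym_2pi (fun s => c * F s) (c * K) a.
Proof.
  intros [C [d [HC [Hd [Hd' H]]]]].
  exists (Rabs c * C), d. repeat split; auto. { apply Rmult_le_pos; auto; apply Rabs_pos. }
  intros s Hs. specialize (H s Hs).
  replace (c * F s - c * K * Rpower (2 * PI - s) a)
    with (c * (F s - K * Rpower (2 * PI - s) a)) by ring.
  rewrite Rabs_mult, !Rmult_assoc. apply Rmult_le_compat_l; [apply Rabs_pos|].
  rewrite <- Rmult_assoc. exact H.
Qed.

Lemma asym_2pi_minus (F G : R -> R) (K1 K2 a : R) :
  asym_2pi F K1 a -> asym_2pi G K2 a -> asym_2pi (fun s => F s - G s) (K1 - K2) a.
Proof.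
  intros H1 H2. apply (asym_2pi_ext (fun s => F s + (-1) * G s)); [intros; ring|].
  eapply asym_2pi_eq; [apply asym_2pi_plus, asym_2pi_scal; eauto | ring | reflexivity].
Qed.

Lemma asym_2pi_mult (F G : R -> R) (K1 K2 a1 a2 : R) :
  asym_2pi F K1 a1 -> asym_2pi G K2 a2 -> asym_2pi (fun s => F s * G s) (K1 * K2) (a1 + a2).
Proof.
  intros [C1 [d1 [HC1 [Hd1 [Hd1' H1]]]]] [C2 [d2 [HC2 [Hd2 [Hd2' H2]]]]].
  exists (C1 * (Rabs K2 + C2) + Rabs K1 * C2), (Rmin d1 d2).
  pose proof (Rmin_l d1 d2). pose proof (Rmin_r d1 d2).
  pose proof (Rabs_pos K1). pose proof (Rabs_pos K2).
  split; [nra|]. split; [now apply Rmin_pos|]. split; [lra|].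
  intros s Hs. specialize (H1 s ltac:(lra)). specialize (H2 s ltac:(lra)).
  set (t := 2 * PI - s) in *. assert (Ht : 0 < t < 1) by (unfold t; lra).
  rewrite Rpower_plus.
  set (T1 := Rpower t a1) in *. set (T2 := Rpower t a2) in *.
  assert (HT1 : 0 < T1) by apply Rpower_pos. assert (HT2 : 0 < T2) by apply Rpower_pos.
  set (r1 := F s - K1 * T1) in *. set (r2 := G s - K2 * T2) in *.
  replace (F s * G s - K1 * K2 * (T1 * T2)) with
    (r1 * (K2 * T2 + r2) + K1 * T1 * r2) by (unfold r1, r2; ring).
  eapply Rle_trans; [apply Rabs_triang|]. rewrite !Rabs_mult, (Rabs_right T1) by lra.
  assert (HG : Rabs (K2 * T2 + r2) <= (Rabs K2 + C2) * T2).
  { eapply Rle_trans; [apply Rabs_triang|]. rewrite Rabs_mult, (Rabs_right T2) by lra.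
    assert (C2 * t * T2 <= C2 * T2) by (apply Rmult_le_compat_r; nra). lra. }
  assert (E1 : Rabs r1 * Rabs (K2 * T2 + r2) <= C1 * t * T1 * ((Rabs K2 + C2) * T2))
    by (apply Rmult_le_compat; try apply Rabs_pos; auto).
  assert (E2 : Rabs K1 * T1 * Rabs r2 <= Rabs K1 * T1 * (C2 * t * T2))
    by (apply Rmult_le_compat_l; [nra | auto]).
  nra.
Qed.

Lemma asym_2pi_weaken (F : R -> R) (K a : R) : asym_2pi F K a -> asym_2pi F 0 (a - 1).
Proof.
  intros [C [d [HC [Hd [Hd' H]]]]].
  exists (Rabs K + C), d. pose proof (Rabs_pos K). repeat split; auto; [lra|].
  intros s Hs. specialize (H s Hs).
  set (t := 2 * PI - s) in *. assert (Ht : 0 < t < 1) by (unfold t; lra).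
  assert (HT : t * Rpower t (a - 1) = Rpower t a).
  { rewrite (Rpower_pred t a) by lra. ring. }
  rewrite Rmult_0_l, Rminus_0_r, Rmult_assoc, HT.
  pose proof (Rpower_pos t a).
  assert (Htri : Rabs (F s) <= Rabs (K * Rpower t a) + Rabs (F s - K * Rpower t a)).
  { replace (F s) with (K * Rpower t a + (F s - K * Rpower t a)) at 1 by ring.
    apply Rabs_triang. }
  rewrite Rabs_mult, (Rabs_right (Rpower t a)) in Htri by lra.
  assert (C * t * Rpower t a <= C * Rpower t a) by (apply Rmult_le_compat_r; nra).
  lra.
Qed.

Lemma asym_2pi_bounded (F : R -> R) :
  (exists B d, 0 < d /\ forall s, 2 * PI - d < s < 2 * PI -> Rabs (F s) <= B) ->
  asym_2pi F 0 (-1).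
Proof.
  intros [B [d [Hd H]]].
  exists (Rabs B), (Rmin d 1). pose proof (Rmin_l d 1). pose proof (Rmin_r d 1).
  split; [apply Rabs_pos|]. split; [apply Rmin_pos; lra|]. split; [lra|].
  intros s Hs. specialize (H s ltac:(lra)).
  set (t := 2 * PI - s) in *. assert (Ht : 0 < t < 1) by (unfold t; lra).
  rewrite Rmult_0_l, Rminus_0_r, Rmult_assoc.
  replace (t * Rpower t (-1)) with 1.
  - pose proof (Rle_abs B). lra.
  - replace (-1) with (- (1)) by ring. rewrite Rpower_Ropp, Rpower_1 by lra. field. lra.
Qed.

Lemma Rpower_rel_error (F K T g r : R) : 0 < K -> 0 < T -> r <= 1/2 ->
  Rabs (F - K * T) <= r * (K * T) ->
  Rabs (Rpower F g - Rpower K g * Rpower T g)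
    <= Rabs g * exp (Rabs (g - 1)) * r * (Rpower K g * Rpower T g).
Proof.
  intros HK HT Hr HF.
  set (rho := (F - K * T) / (K * T)).
  assert (Hrho : Rabs rho <= r).
  { unfold rho, Rdiv. rewrite Rabs_mult, Rabs_inv, (Rabs_right (K * T)) by nra.
    apply (Rmult_le_reg_r (K * T)); [nra|]. rewrite Rmult_assoc, Rinv_l, Rmult_1_r by nra. lra. }
  assert (HFe : F = K * T * (1 + rho)) by (unfold rho; field; nra).
  assert (Hrp : 0 < 1 + rho) by (apply Rabs_le_between in Hrho; lra).
  rewrite HFe, <- !Rpower_mult_distr by nra.
  set (P := Rpower K g * Rpower T g).
  assert (HP : 0 < P) by (unfold P; pose proof (Rpower_pos K g); pose proof (Rpower_pos T g); nra).
  replace (P * Rpower (1 + rho) g - P) with (P * (Rpower (1 + rho) g - 1)) by ring.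
  rewrite Rabs_mult, (Rabs_right P) by lra.
  pose proof (Rpower_1_plus_bound g rho ltac:(lra)).
  pose proof (Rabs_pos g). pose proof (exp_pos (Rabs (g - 1))).
  assert (Rabs g * exp (Rabs (g - 1)) * Rabs rho <= Rabs g * exp (Rabs (g - 1)) * r)
    by (apply Rmult_le_compat_l; nra).
  nra.
Qed.

Lemma asym_2pi_Rpower (F : R -> R) (K a g : R) : 0 < K -> asym_2pi F K a ->
  asym_2pi (fun s => Rpower (F s) g) (Rpower K g) (a * g).
Proof.
  intros HK [C [d [HC [Hd [Hd' H]]]]].
  set (Lg := Rabs g * exp (Rabs (g - 1))).
  assert (HLg : 0 <= Lg)
    by (unfold Lg; pose proof (exp_pos (Rabs (g - 1))); pose proof (Rabs_pos g); nra).
  set (d2 := Rmin d (K / (2 * C + 1))).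
  assert (Hd2 : 0 < d2) by (apply Rmin_pos; [lra | apply Rdiv_lt_0_compat; lra]).
  assert (Hd2a : d2 <= d) by apply Rmin_l.
  assert (Hd2b : d2 * (2 * C + 1) <= K).
  { pose proof (Rmin_r d (K / (2 * C + 1))). fold d2 in H0.
    apply (Rmult_le_compat_r (2 * C + 1)) in H0; [|lra].
    unfold Rdiv in H0. rewrite Rmult_assoc, Rinv_l, Rmult_1_r in H0 by lra. exact H0. }
  exists (Rpower K g * Lg * C / K), d2. split.
  { pose proof (Rpower_pos K g). pose proof (Rinv_0_lt_compat K HK).
    unfold Rdiv. apply Rmult_le_pos; [apply Rmult_le_pos; [apply Rmult_le_pos|]|]; lra. }
  split; [exact Hd2|]. split; [lra|].
  intros s Hs. specialize (H s ltac:(lra)).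
  set (t := 2 * PI - s) in *. assert (Ht : 0 < t < d2) by (unfold t; lra).
  pose proof (Rpower_pos t a) as HT.
  rewrite <- Rpower_mult.
  assert (HCt : C * t / K <= 1/2).
  { apply (Rmult_le_reg_r K); [lra|]. unfold Rdiv. rewrite Rmult_assoc, Rinv_l by lra. nra. }
  eapply Rle_trans; [apply (Rpower_rel_error _ _ _ g (C * t / K) HK HT HCt)|].
  - eapply Rle_trans; [exact H|]. right. field. lra.
  - fold Lg. right. field. lra.
Qed.

Lemma locally_0_2PI (P : R -> Prop) (s : R) : 0 < s < 2 * PI ->
  (forall t, 0 < t < 2 * PI -> P t) -> locally s P.
Proof.
  intros Hs HP. apply (locally_open (fun t => 0 < t < 2 * PI)); auto.
  apply open_and; [apply open_gt | apply open_lt].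
Qed.

(* F = E^g H(E) with E' = 1 / L1(E) and E ~ t / k: every term of F' and F'' is a power
   of E times factors that are bounded or have a limit, so their expansions multiply. *)
Section PowerTimesFunctionOfE.
Variables (E L1 L2 : R -> R) (k : R).
Hypothesis k_pos : 0 < k.
Hypothesis E_pos : forall s, 0 < s < 2 * PI -> 0 < E s.
Hypothesis E_derive : forall s, 0 < s < 2 * PI -> is_derive E s (/ L1 (E s)).
Hypothesis L1_derive : forall e, 0 < e -> is_derive L1 e (L2 e).
Hypothesis L1_neq0 : forall e, 0 < e -> L1 e <> 0.
Hypothesis E_asym : asym_2pi E (/ k) 1.
Hypothesis invL1_asym : asym_2pi (fun s => / L1 (E s)) (- / k) 0.
Hypothesis L2_asym : asym_2pi (fun s => L2 (E s)) 0 (-1).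

Variables (H H1 H2 : R -> R) (h g : R).
Hypothesis H_derive : forall e, 0 < e -> is_derive H e (H1 e).
Hypothesis H1_derive : forall e, 0 < e -> is_derive H1 e (H2 e).
Hypothesis H_asym : asym_2pi (fun s => H (E s)) h 0.
Hypothesis H1_asym : asym_2pi (fun s => H1 (E s)) 0 (-1).
Hypothesis H2_asym : asym_2pi (fun s => H2 (E s)) 0 (-1).

Variable F : R -> R.
Hypothesis F_eq : forall s, 0 < s < 2 * PI -> F s = Rpower (E s) g * H (E s).

Definition pow_mul e := Rpower e g * H e.
Definition pow_mul_d1 e := g * Rpower e (g - 1) * H e + Rpower e g * H1 e.
Definition pow_mul_d2 e :=
  g * (g - 1) * Rpower e (g - 2) * H e + 2 * g * Rpower e (g - 1) * H1 e + Rpower e g * H2 e.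

Definition pow_mul_E_d1 s := pow_mul_d1 (E s) * / L1 (E s).
Definition pow_mul_E_d2 s :=
  pow_mul_d2 (E s) * / L1 (E s) * / L1 (E s)
  - pow_mul_d1 (E s) * L2 (E s) * / L1 (E s) * / L1 (E s) * / L1 (E s).

Lemma is_derive_pow_mul e : 0 < e -> is_derive pow_mul e (pow_mul_d1 e).
Proof.
  intros He. unfold pow_mul. eapply is_derive_val_eq.
  - apply is_derive_Rmult; [apply is_derive_Rpower | apply H_derive]; exact He.
  - unfold pow_mul_d1. ring.
Qed.

Lemma is_derive_pow_mul_d1 e : 0 < e -> is_derive pow_mul_d1 e (pow_mul_d2 e).
Proof.
  intros He. unfold pow_mul_d1. eapply is_derive_val_eq.
  - apply is_derive_Rplus; apply is_derive_Rmult.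
    + apply (is_derive_scal (fun y => Rpower y (g - 1))), is_derive_Rpower, He.
    + apply H_derive, He.
    + apply is_derive_Rpower, He.
    + apply H1_derive, He.
  - unfold pow_mul_d2. replace (g - 1 - 1) with (g - 2) by ring. simpl. ring.
Qed.

Lemma is_derive_pow_mul_E s : 0 < s < 2 * PI ->
  is_derive (fun t => pow_mul (E t)) s (pow_mul_E_d1 s).
Proof.
  intros Hs. apply is_derive_Rcomp; [apply is_derive_pow_mul, E_pos | apply E_derive]; exact Hs.
Qed.

Lemma is_derive_pow_mul_E_d1 s : 0 < s < 2 * PI -> is_derive pow_mul_E_d1 s (pow_mul_E_d2 s).
Proof.
  intros Hs. pose proof (E_pos s Hs) as He. pose proof (L1_neq0 (E s) He) as Hnz.
  unfold pow_mul_E_d1. eapply is_derive_val_eq.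
  - apply is_derive_Rmult; [apply is_derive_Rcomp; auto using is_derive_pow_mul_d1|].
    apply is_derive_inv; [apply is_derive_Rcomp; auto | exact Hnz].
  - unfold pow_mul_E_d2. field. exact Hnz.
Qed.

Let Derive_pow_mul_E s : 0 < s < 2 * PI -> Derive F s = pow_mul_E_d1 s.
Proof.
  intros Hs. rewrite (Derive_ext_loc _ (fun t => pow_mul (E t))).
  - now apply is_derive_unique, is_derive_pow_mul_E.
  - apply locally_0_2PI; [exact Hs | exact F_eq].
Qed.

Let Derive_2_pow_mul_E s : 0 < s < 2 * PI -> Derive_n F 2 s = pow_mul_E_d2 s.
Proof.
  intros Hs. simpl. rewrite (Derive_ext_loc _ pow_mul_E_d1).
  - now apply is_derive_unique, is_derive_pow_mul_E_d1.
  - apply locally_0_2PI; [exact Hs | exact Derive_pow_mul_E].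
Qed.

Let E_pow_asym c : asym_2pi (fun s => Rpower (E s) c) (Rpower (/ k) c) (1 * c).
Proof. apply asym_2pi_Rpower; [now apply Rinv_0_lt_compat | exact E_asym]. Qed.

Let asym_pow_mul_E : asym_2pi F (h * Rpower (/ k) g) g.
Proof.
  apply (asym_2pi_ext (fun s => Rpower (E s) g * H (E s))); [intros; symmetry; auto|].
  eapply asym_2pi_eq; [apply asym_2pi_mult; [apply E_pow_asym | apply H_asym] | ring | ring].
Qed.

Let pow_mul_d1_asym :
  asym_2pi (fun s => pow_mul_d1 (E s)) (g * h * Rpower (/ k) (g - 1)) (g - 1).
Proof.
  assert (T1 : asym_2pi (fun s => g * (Rpower (E s) (g - 1) * H (E s)))
                        (g * (Rpower (/ k) (g - 1) * h)) (g - 1)).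
  { eapply asym_2pi_eq; [apply asym_2pi_scal, asym_2pi_mult, H_asym; apply E_pow_asym
                        | reflexivity | ring]. }
  assert (T2 : asym_2pi (fun s => Rpower (E s) g * H1 (E s)) 0 (g - 1)).
  { eapply asym_2pi_eq; [apply asym_2pi_mult, H1_asym; apply E_pow_asym | ring | ring]. }
  apply (asym_2pi_ext (fun s => g * (Rpower (E s) (g - 1) * H (E s))
                               + Rpower (E s) g * H1 (E s))); [intros; unfold pow_mul_d1; ring|].
  eapply asym_2pi_eq; [apply (asym_2pi_plus _ _ _ _ _ T1 T2) | ring | reflexivity].
Qed.

Let pow_mul_d2_asym :
  asym_2pi (fun s => pow_mul_d2 (E s)) (g * (g - 1) * h * Rpower (/ k) (g - 2)) (g - 2).
Proof.
  assert (T1 : asym_2pi (fun s => g * (g - 1) * (Rpower (E s) (g - 2) * H (E s)))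
                        (g * (g - 1) * (Rpower (/ k) (g - 2) * h)) (g - 2)).
  { eapply asym_2pi_eq; [apply asym_2pi_scal, asym_2pi_mult, H_asym; apply E_pow_asym
                        | reflexivity | ring]. }
  assert (T2 : asym_2pi (fun s => 2 * g * (Rpower (E s) (g - 1) * H1 (E s))) 0 (g - 2)).
  { eapply asym_2pi_eq; [apply asym_2pi_scal, asym_2pi_mult, H1_asym; apply E_pow_asym
                        | ring | ring]. }
  assert (T3 : asym_2pi (fun s => Rpower (E s) g * H2 (E s)) 0 (g - 2)).
  { eapply asym_2pi_eq;
      [exact (asym_2pi_weaken _ _ _ (asym_2pi_mult _ _ _ _ _ _ (E_pow_asym g) H2_asym))
      | reflexivity | ring]. }
  apply (asym_2pi_ext (fun s => g * (g - 1) * (Rpower (E s) (g - 2) * H (E s))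
     + 2 * g * (Rpower (E s) (g - 1) * H1 (E s)) + Rpower (E s) g * H2 (E s)));
    [intros; unfold pow_mul_d2; ring|].
  eapply asym_2pi_eq;
    [apply (asym_2pi_plus _ _ _ _ _ (asym_2pi_plus _ _ _ _ _ T1 T2) T3) | ring | reflexivity].
Qed.

Let asym_Derive_pow_mul_E : asym_2pi (Derive F) (- (g * h * Rpower (/ k) g)) (g - 1).
Proof.
  apply (asym_2pi_ext pow_mul_E_d1); [intros; symmetry; now apply Derive_pow_mul_E|].
  eapply asym_2pi_eq; [apply (asym_2pi_mult _ _ _ _ _ _ pow_mul_d1_asym invL1_asym) | | ring].
  rewrite (Rpower_pred (/ k) g) by (now apply Rinv_0_lt_compat). ring.
Qed.

Let asym_Derive_2_pow_mul_E :
  asym_2pi (Derive_n F 2) (g * (g - 1) * h * Rpower (/ k) g) (g - 2).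
Proof.
  assert (T1 : asym_2pi (fun s => pow_mul_d2 (E s) * / L1 (E s) * / L1 (E s))
                 (g * (g - 1) * h * Rpower (/ k) (g - 2) * (- / k) * (- / k)) (g - 2)).
  { eapply asym_2pi_eq;
      [exact (asym_2pi_mult _ _ _ _ _ _
                (asym_2pi_mult _ _ _ _ _ _ pow_mul_d2_asym invL1_asym) invL1_asym)
      | reflexivity | ring]. }
  assert (T2 : asym_2pi (fun s => pow_mul_d1 (E s) * L2 (E s)
                                  * / L1 (E s) * / L1 (E s) * / L1 (E s)) 0 (g - 2)).
  { eapply asym_2pi_eq;
      [repeat apply asym_2pi_mult; [exact pow_mul_d1_asym | exact L2_asym | exact invL1_asym ..]
      | ring | ring]. }
  apply (asym_2pi_ext pow_mul_E_d2); [intros; symmetry; now apply Derive_2_pow_mul_E|].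
  eapply asym_2pi_eq; [apply (asym_2pi_minus _ _ _ _ _ T1 T2) | | reflexivity].
  assert (Hk : 0 < / k) by (now apply Rinv_0_lt_compat).
  rewrite (Rpower_pred (/ k) g), (Rpower_pred (/ k) (g - 1)) by exact Hk.
  replace (g - 1 - 1) with (g - 2) by ring. ring.
Qed.

Lemma asym_2pi_pow_mul_E :
  asym_2pi F (h * Rpower (/ k) g) g /\
  asym_2pi (Derive F) (- (g * h * Rpower (/ k) g)) (g - 1) /\
  asym_2pi (Derive_n F 2) (g * (g - 1) * h * Rpower (/ k) g) (g - 2).
Proof. exact (conj asym_pow_mul_E (conj asym_Derive_pow_mul_E asym_Derive_2_pow_mul_E)). Qed.

End PowerTimesFunctionOfE.

Section Period.
Variable p : R.
Hypothesis hp : 1 < p.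

Definition kappa := 2 / (p + 1).

Lemma kappa_pos : 0 < kappa.
Proof. unfold kappa. apply Rdiv_lt_0_compat; lra. Qed.

Definition power_quotient (z : R) : R :=
  if Req_EM_T z 1 then p + 1 else (1 - rpow z (p + 1)) / (1 - z).

Lemma power_quotient_1 : power_quotient 1 = p + 1.
Proof. unfold power_quotient. destruct (Req_EM_T 1 1); [reflexivity | lra]. Qed.

Lemma power_quotient_neq1 z : z <> 1 -> power_quotient z = (1 - rpow z (p + 1)) / (1 - z).
Proof. intros H. unfold power_quotient. destruct (Req_EM_T z 1); [lra | reflexivity]. Qed.

Lemma power_quotient_spec z : 1 - rpow z (p + 1) = (1 - z) * power_quotient z.
Proof.
  destruct (Req_dec z 1) as [->|H].
  - rewrite power_quotient_1, rpow_Rpower, Rpower_1_l by lra. ring.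
  - rewrite power_quotient_neq1 by exact H. field. lra.
Qed.

Lemma power_quotient_ge1 z : 0 <= z <= 1 -> 1 <= power_quotient z.
Proof.
  intros Hz. destruct (Req_dec z 1) as [->|Hne]; [rewrite power_quotient_1; lra|].
  apply (Rmult_le_reg_l (1 - z)); [lra|]. rewrite <- power_quotient_spec.
  destruct (Req_dec z 0) as [->|Hz0].
  - rewrite rpow_le0 by lra. lra.
  - rewrite rpow_Rpower by lra. pose proof (Rpower_le_self z (p + 1)). lra.
Qed.

Lemma power_quotient_bounds z : z <= 1 -> 0 <= power_quotient z <= p + 1.
Proof.
  intros Hz. destruct (Req_dec z 1) as [->|Hne]; [rewrite power_quotient_1; lra|].
  assert (Hpos : 0 < 1 - z) by lra.
  cut (0 <= (1 - z) * power_quotient z <= (p + 1) * (1 - z)); [nra|].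
  rewrite <- power_quotient_spec.
  destruct (Rle_dec z 0) as [Hz0|Hz0].
  { rewrite rpow_le0 by exact Hz0. nra. }
  rewrite rpow_Rpower by lra.
  destruct (MVT_gen (fun y => Rpower y (p + 1)) z 1 (fun y => (p + 1) * Rpower y (p + 1 - 1)))
    as [c [Hc Heq]];
    rewrite Rmin_left, Rmax_right in * by lra.
  - intros x Hx. apply is_derive_Rpower. lra.
  - intros x Hx. apply continuity_pt_Rpower. lra.
  - rewrite Rpower_1_l in Heq.
    pose proof (Rpower_pos c (p + 1 - 1)).
    assert (Rpower c (p + 1 - 1) <= 1)
      by (rewrite <- (Rpower_O c) by lra; apply Rpower_le_exp_le1; lra).
    rewrite Heq. assert (0 < (p + 1) * (1 - z)) by nra. split; nra.
Qed.

Lemma continuity_pt_power_quotient z : 0 <= z <= 1 -> continuity_pt power_quotient z.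
Proof.
  intros Hz. destruct (Req_dec z 1) as [->|Hne].
  - apply continuity_pt_intro. intros eps Heps.
    pose proof (derivable_pt_lim_power 1 (p + 1) Rlt_0_1) as HD.
    destruct (HD eps Heps) as [del Hdel].
    exists (Rmin del (1/2)). split; [apply Rmin_pos; [apply cond_pos | lra]|].
    intros y Hy. pose proof (Rmin_l del (1/2)). pose proof (Rmin_r del (1/2)).
    rewrite power_quotient_1. destruct (Req_dec y 1) as [->|Hy1].
    { rewrite power_quotient_1, Rminus_eq_0, Rabs_R0. lra. }
    specialize (Hdel (y - 1) ltac:(lra) ltac:(lra)).
    replace (1 + (y - 1)) with y in Hdel by ring.
    rewrite !Rpower_1_l, Rmult_1_r in Hdel.
    apply Rabs_lt_between' in Hy.
    rewrite power_quotient_neq1, rpow_Rpower by lra.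
    replace ((1 - Rpower y (p + 1)) / (1 - y)) with ((Rpower y (p + 1) - 1) / (y - 1))
      by (field; lra).
    exact Hdel.
  - apply (continuity_pt_locally_ext (fun y => (1 - rpow y (p + 1)) / (1 - y)) _ (1 - z));
      [lra| |].
    + intros y Hy. unfold Rdist in Hy. apply Rabs_lt_between' in Hy.
      symmetry. apply power_quotient_neq1. lra.
    + apply continuity_pt_div; [apply continuity_pt_minus | apply continuity_pt_minus | lra].
      * apply continuity_pt_const. now intros a b.
      * apply continuity_pt_rpow; lra.
      * apply continuity_pt_const. now intros a b.
      * apply continuity_pt_id.
Qed.

Lemma kappa_power_quotient_bounds u : 0 <= u <= 1 ->
  kappa <= kappa * power_quotient (1 - u ^ 2) <= 2.
Proof.
  intros Hu. pose proof kappa_pos.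
  pose proof (power_quotient_ge1 (1 - u ^ 2) ltac:(nra)).
  pose proof (power_quotient_bounds (1 - u ^ 2) ltac:(nra)).
  assert (kappa * (p + 1) = 2) by (unfold kappa; field; lra).
  split; nra.
Qed.

Definition Lambda_base (e u : R) := 2 - u ^ 2 + kappa * e * power_quotient (1 - u ^ 2).

Definition Lambda_weight (n : nat) (u : R) :=
  2 * falling (-1/2) n * (kappa * power_quotient (1 - u ^ 2)) ^ n.

Definition Lambda_integrand (n : nat) (e u : R) :=
  Lambda_weight n u * Rpower (Lambda_base e u) (-1/2 - INR n).

(* [Lambda 0 e] is the period integral after the substitution z = 1 - u^2, with
   e = N(c)^(p-1) (see [period_Lambda]); [Lambda n] is its n-th derivative in e. *)
Definition Lambda (n : nat) (e : R) := 4 * RInt (Lambda_integrand n e) 0 1.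

Lemma Lambda_base_pos e u : -1/8 < e -> u ^ 2 <= 3/2 -> 0 < Lambda_base e u.
Proof.
  intros He Hu. unfold Lambda_base.
  pose proof (power_quotient_bounds (1 - u ^ 2) ltac:(nra)). pose proof kappa_pos.
  assert (kappa * (p + 1) = 2) by (unfold kappa; field; lra).
  set (w := kappa * power_quotient (1 - u ^ 2)).
  assert (0 <= w <= 2) by (unfold w; split; nra).
  replace (kappa * e * power_quotient (1 - u ^ 2)) with (e * w) by (unfold w; ring).
  destruct (Rle_dec 0 e); nra.
Qed.

Lemma Lambda_base_bounds e u : 0 <= e -> 0 <= u <= 1 ->
  1 + kappa * e <= Lambda_base e u <= 2 + 2 * e.
Proof.
  intros He Hu. unfold Lambda_base. pose proof (kappa_power_quotient_bounds u Hu).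
  replace (kappa * e * power_quotient (1 - u ^ 2))
    with (e * (kappa * power_quotient (1 - u ^ 2))) by ring.
  split; nra.
Qed.

Lemma Lambda_base_ge1 e u : 0 <= e -> 0 <= u <= 1 -> 1 <= Lambda_base e u.
Proof.
  intros He Hu. pose proof kappa_pos. pose proof (Lambda_base_bounds e u He Hu). nra.
Qed.

Lemma is_derive_Lambda_integrand n e u : 0 < Lambda_base e u ->
  is_derive (fun z => Lambda_integrand n z u) e (Lambda_integrand (S n) e u).
Proof.
  intros HD. unfold Lambda_integrand.
  set (w := kappa * power_quotient (1 - u ^ 2)).
  assert (Hlin : is_derive (fun z => Lambda_base z u) e w).
  { apply (is_derive_ext (fun z : R => (2 - u ^ 2) + w * z));
      [intros t; unfold Lambda_base, w; simpl; ring|].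
    auto_derive; [exact I | ring]. }
  pose proof (is_derive_comp _ _ e _ _ (is_derive_Rpower (-1/2 - INR n) _ HD) Hlin) as Hc.
  apply is_derive_scal with (k := Lambda_weight n u) in Hc.
  eapply is_derive_val_eq; [exact Hc|].
  rewrite S_INR. replace (-1 / 2 - (INR n + 1)) with (-1 / 2 - INR n - 1) by ring.
  unfold scal; simpl; unfold mult; simpl.
  unfold Lambda_weight. fold w. simpl. ring.
Qed.

Ltac continuity_by_derive := apply continuity_pt_filterlim;
  match goal with |- filterlim ?f (locally ?x) _ =>
    apply (ex_derive_continuous (K:=R_AbsRing) (V:=R_NormedModule) f x) end;
  auto_derive; auto.

Lemma continuity_pt_power_quotient_sq t : 0 <= t <= 1 ->
  continuity_pt (fun u => power_quotient (1 - u ^ 2)) t.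
Proof.
  intros Ht. apply (continuity_pt_comp (fun u => 1 - u ^ 2) power_quotient).
  - continuity_by_derive.
  - apply continuity_pt_power_quotient. nra.
Qed.

Lemma continuity_pt_Lambda_weight n t : 0 <= t <= 1 -> continuity_pt (Lambda_weight n) t.
Proof.
  intros Ht.
  apply (continuity_pt_comp (fun u => power_quotient (1 - u ^ 2))
                            (fun x => 2 * falling (-1/2) n * (kappa * x) ^ n)).
  - now apply continuity_pt_power_quotient_sq.
  - continuity_by_derive.
Qed.

Lemma continuity_2d_pt_snd (f : R -> R) (e t : R) :
  continuity_pt f t -> continuity_2d_pt (fun _ v => f v) e t.
Proof.
  intros H. apply (continuity_1d_2d_pt_comp f (fun _ v => v)); [exact H | apply continuity_2d_pt_id2].
Qed.

Lemma continuity_2d_pt_fst (f : R -> R) (e t : R) :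
  continuity_pt f e -> continuity_2d_pt (fun z _ => f z) e t.
Proof.
  intros H. apply (continuity_1d_2d_pt_comp f (fun z _ => z)); [exact H | apply continuity_2d_pt_id1].
Qed.

Lemma continuity_2d_pt_Lambda_integrand n e t : -1/8 < e -> 0 <= t <= 1 ->
  continuity_2d_pt (Lambda_integrand n) e t.
Proof.
  intros He Ht. unfold Lambda_integrand.
  apply (continuity_2d_pt_mult (fun _ v => Lambda_weight n v)).
  { apply continuity_2d_pt_snd. now apply continuity_pt_Lambda_weight. }
  apply (continuity_1d_2d_pt_comp (fun x => Rpower x (-1/2 - INR n)) Lambda_base).
  { apply continuity_pt_Rpower, Lambda_base_pos; [exact He | nra]. }
  unfold Lambda_base.
  apply (continuity_2d_pt_plus (fun _ v => 2 - v ^ 2)).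
  { apply continuity_2d_pt_snd. continuity_by_derive. }
  apply (continuity_2d_pt_mult (fun z _ => kappa * z) (fun _ v => power_quotient (1 - v ^ 2))).
  - apply continuity_2d_pt_fst. continuity_by_derive.
  - apply continuity_2d_pt_snd. now apply continuity_pt_power_quotient_sq.
Qed.

Lemma continuous_Lambda_integrand n e t : -1/8 < e -> 0 <= t <= 1 ->
  continuous (Lambda_integrand n e) t.
Proof.
  intros He Ht. apply continuity_pt_filterlim. unfold Lambda_integrand.
  apply continuity_pt_mult; [now apply continuity_pt_Lambda_weight|].
  apply (continuity_pt_comp (Lambda_base e) (fun x => Rpower x (-1/2 - INR n))).
  - unfold Lambda_base. apply continuity_pt_plus; [continuity_by_derive|].
    apply continuity_pt_mult; [apply continuity_pt_const; now intros a b|].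
    now apply continuity_pt_power_quotient_sq.
  - apply continuity_pt_Rpower, Lambda_base_pos; [exact He | nra].
Qed.

Lemma ex_RInt_Lambda_integrand n e a b : -1/8 < e -> 0 <= a <= b -> b <= 1 ->
  ex_RInt (Lambda_integrand n e) a b.
Proof.
  intros He Hab Hb. apply (ex_RInt_continuous (V:=R_CompleteNormedModule)). intros z Hz.
  rewrite Rmin_left, Rmax_right in Hz by lra. apply continuous_Lambda_integrand; lra.
Qed.

Lemma is_derive_Lambda n e : -1/8 < e -> is_derive (Lambda n) e (Lambda (S n) e).
Proof.
  intros He. apply is_derive_scal.
  assert (Hd : forall e' v, -1/8 < e' -> Rabs v <= 11/10 ->
     Derive (fun z => Lambda_integrand n z v) e' = Lambda_integrand (S n) e' v).
  { intros e' v He' Hv. apply is_derive_unique, is_derive_Lambda_integrand, Lambda_base_pos;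
      [exact He'|]. apply Rabs_le_between in Hv. nra. }
  assert (HR : RInt (fun t => Derive (fun u => Lambda_integrand n u t) e) 0 1
               = RInt (Lambda_integrand (S n) e) 0 1).
  { apply RInt_ext. intros x Hx. rewrite Rmin_left, Rmax_right in Hx by lra.
    apply Hd; [lra | rewrite Rabs_right; lra]. }
  rewrite <- HR.
  pose proof (is_derive_RInt_param (Lambda_integrand n) 0 1 e) as H.
  rewrite Rmin_left, Rmax_right in H by lra. apply H.
  - apply (locally_Rabs _ _ (e + 1/8)); [lra|]. intros y Hy t Ht. apply Rabs_lt_between' in Hy.
    eexists. apply is_derive_Lambda_integrand, Lambda_base_pos; [lra | nra].
  - intros t Ht. apply (continuity_2d_pt_ext_loc (Lambda_integrand (S n))).
    + assert (Hpos : 0 < Rmin (e + 1/8) (1/10)) by (apply Rmin_pos; lra).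
      exists (mkposreal _ Hpos). intros u v Hu Hv. simpl in Hu, Hv.
      pose proof (Rmin_l (e + 1/8) (1/10)). pose proof (Rmin_r (e + 1/8) (1/10)).
      apply Rabs_lt_between' in Hu. apply Rabs_lt_between' in Hv.
      symmetry. apply Hd; [lra | apply Rabs_le; lra].
    + now apply continuity_2d_pt_Lambda_integrand.
  - apply (locally_Rabs _ _ (e + 1/8)); [lra|]. intros y Hy. apply Rabs_lt_between' in Hy.
    apply ex_RInt_Lambda_integrand; lra.
Qed.

Lemma continuity_pt_Lambda n e : -1/8 < e -> continuity_pt (Lambda n) e.
Proof.
  intros He. apply continuity_pt_filterlim.
  apply (ex_derive_continuous (K:=R_AbsRing) (V:=R_NormedModule) (Lambda n)).
  eexists. now apply is_derive_Lambda.
Qed.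

Lemma Lambda_integrand_0 e u : Lambda_integrand 0 e u = 2 * Rpower (Lambda_base e u) (-1/2).
Proof. unfold Lambda_integrand, Lambda_weight. simpl. replace (-1/2 - 0) with (-1/2) by field. ring. Qed.

Lemma Lambda_integrand_1 e u : Lambda_integrand 1 e u =
  - (kappa * power_quotient (1 - u ^ 2)) * Rpower (Lambda_base e u) (-3/2).
Proof. unfold Lambda_integrand, Lambda_weight. simpl. replace (-1/2 - 1) with (-3/2) by field. field. Qed.

Lemma Lambda_integrand_2 e u : Lambda_integrand 2 e u =
  3/2 * (kappa * power_quotient (1 - u ^ 2)) ^ 2 * Rpower (Lambda_base e u) (-5/2).
Proof.
  unfold Lambda_integrand, Lambda_weight. simpl.
  replace (-1/2 - (1 + 1)) with (-5/2) by field. field.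
Qed.

Lemma is_derive_asin x : -1 < x < 1 -> is_derive asin x (1 / sqrt (1 - x²)).
Proof.
  intros Hx. apply is_derive_Reals. rewrite <- (derive_pt_asin x Hx).
  destruct (derivable_pt_asin x Hx) as [l Hl]. exact Hl.
Qed.

(* At e = 0 the integrand is 2 / sqrt (2 - u^2), with primitive 2 asin (u / sqrt 2). *)
Lemma Lambda_0_0 : Lambda 0 0 = 2 * PI.
Proof.
  assert (Hs : 1 < sqrt 2) by (rewrite <- sqrt_1; apply sqrt_lt_1; lra).
  assert (H : is_RInt (Lambda_integrand 0 0) 0 1
                (minus (2 * asin (1 / sqrt 2)) (2 * asin (0 / sqrt 2)))).
  { apply (is_RInt_derive (V:=R_CompleteNormedModule) (fun u => 2 * asin (u / sqrt 2))).
    - intros x Hx. rewrite Rmin_left, Rmax_right in Hx by lra.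
      assert (Hx2 : -1 < x / sqrt 2 < 1).
      { split; [apply (Rlt_le_trans _ 0); [lra | apply Rcomplements.Rdiv_le_0_compat; lra]|].
        apply Rcomplements.Rlt_div_l; lra. }
      assert (Hl : is_derive (fun u : R => u / sqrt 2) x (/ sqrt 2)) by (auto_derive; [lra | ring]).
      pose proof (is_derive_scal _ x 2 _ (is_derive_Rcomp asin _ x _ _ (is_derive_asin _ Hx2) Hl))
        as Hd.
      eapply is_derive_val_eq; [exact Hd|].
      rewrite Lambda_integrand_0. unfold Lambda_base.
      replace (2 - x ^ 2 + kappa * 0 * power_quotient (1 - x ^ 2)) with (2 - x ^ 2) by ring.
      rewrite Rpower_mhalf by nra.
      assert (Hsq : sqrt (2 - x ^ 2) = sqrt 2 * sqrt (1 - (x / sqrt 2)²)).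
      { rewrite <- sqrt_mult_alt by lra. f_equal. unfold Rsqr.
        field_simplify; [rewrite pow2_sqrt by lra; field|]; lra. }
      assert (0 < sqrt (1 - (x / sqrt 2)²)) by (apply sqrt_lt_R0; unfold Rsqr; nra).
      rewrite Hsq. field. lra.
    - intros x Hx. rewrite Rmin_left, Rmax_right in Hx by lra.
      apply continuous_Lambda_integrand; lra. }
  unfold Lambda. rewrite (is_RInt_unique (V:=R_CompleteNormedModule) _ _ _ _ H).
  unfold minus, plus, opp; simpl.
  replace (1 / sqrt 2) with (/ sqrt 2) by (field; lra).
  replace (0 / sqrt 2) with 0 by (field; lra).
  rewrite asin_inv_sqrt2, asin_0. field.
Qed.

Lemma Lambda_0_bounds e : 0 <= e ->
  8 * Rpower (2 + 2 * e) (-1/2) <= Lambda 0 e <= 8 * Rpower (1 + kappa * e) (-1/2).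
Proof.
  intros He. pose proof kappa_pos. unfold Lambda.
  assert (Hint : forall c, RInt (fun _ => 2 * c) 0 1 = 2 * c)
    by (intros c; rewrite RInt_const; unfold scal; simpl; unfold mult; simpl; ring).
  split.
  - replace (8 * Rpower (2 + 2 * e) (-1/2))
      with (4 * RInt (fun _ => 2 * Rpower (2 + 2 * e) (-1/2)) 0 1) by (rewrite Hint; ring).
    apply Rmult_le_compat_l; [lra|]. apply RInt_le; [lra | apply ex_RInt_const |
      now apply ex_RInt_Lambda_integrand; lra|].
    intros x Hx. rewrite Lambda_integrand_0. apply Rmult_le_compat_l; [lra|].
    pose proof (Lambda_base_bounds e x He ltac:(lra)).
    apply Rpower_le_base_nonpos; nra.
  - replace (8 * Rpower (1 + kappa * e) (-1/2))
      with (4 * RInt (fun _ => 2 * Rpower (1 + kappa * e) (-1/2)) 0 1) by (rewrite Hint; ring).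
    apply Rmult_le_compat_l; [lra|]. apply RInt_le; [lra | now apply ex_RInt_Lambda_integrand; lra
      | apply ex_RInt_const|].
    intros x Hx. rewrite Lambda_integrand_0. apply Rmult_le_compat_l; [lra|].
    pose proof (Lambda_base_bounds e x He ltac:(lra)).
    apply Rpower_le_base_nonpos; nra.
Qed.

Lemma Lambda_1_upper e : 0 <= e -> Lambda 1 e <= - 4 * (kappa * Rpower (2 + 2 * e) (-3/2)).
Proof.
  intros He. unfold Lambda.
  assert (H : RInt (Lambda_integrand 1 e) 0 1
              <= RInt (fun _ => - (kappa * Rpower (2 + 2 * e) (-3/2))) 0 1).
  { apply RInt_le; [lra | now apply ex_RInt_Lambda_integrand; lra | apply ex_RInt_const|].
    intros x Hx. rewrite Lambda_integrand_1.
    pose proof (Lambda_base_bounds e x He ltac:(lra)). pose proof kappa_pos.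
    pose proof (kappa_power_quotient_bounds x ltac:(lra)).
    pose proof (Rpower_le_base_nonpos (-3/2) (Lambda_base e x) (2 + 2 * e) ltac:(lra) ltac:(nra)).
    pose proof (Rpower_pos (2 + 2 * e) (-3/2)).
    nra. }
  rewrite RInt_const in H. unfold scal in H; simpl in H; unfold mult in H; simpl in H. lra.
Qed.

Lemma Lambda_1_neg e : 0 <= e -> Lambda 1 e < 0.
Proof.
  intros He. pose proof (Lambda_1_upper e He). pose proof kappa_pos.
  pose proof (Rpower_pos (2 + 2 * e) (-3/2)). nra.
Qed.

Lemma Lambda_2_bound e : 0 <= e -> Rabs (Lambda 2 e) <= 24.
Proof.
  intros He. unfold Lambda. rewrite Rabs_mult, Rabs_right by lra.
  assert (H : Rabs (RInt (Lambda_integrand 2 e) 0 1) <= (1 - 0) * 6).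
  { apply abs_RInt_le_const; [lra | now apply ex_RInt_Lambda_integrand; lra|].
    intros t Ht. rewrite Lambda_integrand_2.
    pose proof (Lambda_base_ge1 e t He Ht).
    pose proof (Rpower_nonpos_le1 (-5/2) (Lambda_base e t) ltac:(lra) ltac:(lra)).
    pose proof (Rpower_pos (Lambda_base e t) (-5/2)).
    pose proof (kappa_power_quotient_bounds t Ht). pose proof kappa_pos.
    set (w := kappa * power_quotient (1 - t ^ 2)) in *.
    set (r := Rpower (Lambda_base e t) (-5 / 2)) in *.
    rewrite Rabs_right by (apply Rle_ge; apply Rmult_le_pos; [|lra]; nra).
    assert (w ^ 2 <= 4) by nra. nra. }
  lra.
Qed.

Lemma Lambda_0_decreasing x y : 0 <= x < y -> Lambda 0 y < Lambda 0 x.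
Proof.
  intros Hxy.
  destruct (MVT_gen (Lambda 0) x y (Lambda 1)) as [c [Hc Heq]];
    rewrite Rmin_left, Rmax_right in * by lra.
  - intros z Hz. apply is_derive_Lambda. lra.
  - intros z Hz. apply continuity_pt_Lambda. lra.
  - pose proof (Lambda_1_neg c ltac:(lra)). nra.
Qed.

Lemma Lambda_0_inj x y : 0 <= x -> 0 <= y -> Lambda 0 x = Lambda 0 y -> x = y.
Proof.
  intros Hx Hy H. destruct (Rtotal_order x y) as [Hl|[He|Hg]]; auto.
  - pose proof (Lambda_0_decreasing x y ltac:(lra)). lra.
  - pose proof (Lambda_0_decreasing y x ltac:(lra)). lra.
Qed.

Lemma Lambda_0_range e : 0 <= e -> 0 < Lambda 0 e <= 2 * PI.
Proof.
  intros He. split.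
  - pose proof (Lambda_0_bounds e He). pose proof (Rpower_pos (2 + 2 * e) (-1/2)). lra.
  - rewrite <- Lambda_0_0. destruct He as [He|<-]; [|lra].
    left. apply Lambda_0_decreasing. lra.
Qed.

Lemma Lambda_0_onto s : 0 < s <= 2 * PI -> exists e, 0 <= e /\ Lambda 0 e = s.
Proof.
  intros Hs. destruct (Req_dec s (2 * PI)) as [->|Hne].
  { exists 0. split; [lra | apply Lambda_0_0]. }
  pose proof PI_RGT_0. pose proof PI_4. pose proof kappa_pos.
  set (E1 := ((16 / s) ^ 2 - 1) / kappa).
  assert (H16 : 1 < 16 / s) by (apply Rcomplements.Rlt_div_r; lra).
  assert (HE1 : 0 < E1) by (unfold E1; apply Rdiv_lt_0_compat; nra).
  assert (HL1 : Lambda 0 E1 < s).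
  { destruct (Lambda_0_bounds E1 ltac:(lra)) as [_ Hu].
    replace (1 + kappa * E1) with ((16 / s) ^ 2) in Hu by (unfold E1; field; lra).
    rewrite Rpower_mhalf, sqrt_pow2 in Hu by nra.
    replace (8 * / (16 / s)) with (s / 2) in Hu by (field; lra). lra. }
  destruct (Ranalysis5.IVT_interv (fun e => s - Lambda 0 e) 0 E1) as [z [Hz Hz0]];
    [| exact HE1 | rewrite Lambda_0_0; lra | lra | exists z; split; lra].
  intros a Ha. apply continuity_pt_minus; [apply continuity_pt_const; now intros u v|].
  apply continuity_pt_Lambda. lra.
Qed.

Definition slope_2pi := - Lambda 1 0.

Lemma slope_2pi_pos : 0 < slope_2pi.
Proof. unfold slope_2pi. pose proof (Lambda_1_neg 0 ltac:(lra)). lra. Qed.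

Lemma Lambda_1_near_0 e : 0 <= e -> Rabs (Lambda 1 e + slope_2pi) <= 24 * e.
Proof.
  intros He. unfold slope_2pi. destruct He as [He|<-].
  2: { replace (Lambda 1 0 + - Lambda 1 0) with 0 by ring. rewrite Rabs_R0. lra. }
  destruct (MVT_gen (Lambda 1) 0 e (Lambda 2)) as [c [Hc Heq]];
    rewrite Rmin_left, Rmax_right in * by lra.
  - intros x Hx. apply is_derive_Lambda. lra.
  - intros x Hx. apply continuity_pt_Lambda. lra.
  - replace (Lambda 1 e + - Lambda 1 0) with (Lambda 2 c * e) by lra.
    rewrite Rabs_mult, (Rabs_right e) by lra.
    pose proof (Lambda_2_bound c ltac:(lra)). nra.
Qed.

Lemma Lambda_0_near_0 e : 0 <= e ->
  Rabs (slope_2pi * e - (2 * PI - Lambda 0 e)) <= 24 * (e * e).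
Proof.
  intros He. destruct He as [He|<-].
  2: { rewrite Lambda_0_0. replace (slope_2pi * 0 - (2 * PI - 2 * PI)) with 0 by ring.
       rewrite Rabs_R0. lra. }
  destruct (MVT_gen (fun x => Lambda 0 x + slope_2pi * x) 0 e (fun x => Lambda 1 x + slope_2pi))
    as [c [Hc Heq]]; rewrite Rmin_left, Rmax_right in * by lra.
  - intros x Hx.
    apply is_derive_Rplus; [apply is_derive_Lambda; lra | auto_derive; [exact I | ring]].
  - intros x Hx. apply continuity_pt_plus; [apply continuity_pt_Lambda; lra|].
    apply continuity_pt_scal, continuity_pt_id.
  - rewrite Lambda_0_0 in Heq.
    replace (slope_2pi * e - (2 * PI - Lambda 0 e)) with ((Lambda 1 c + slope_2pi) * e) by lra.
    rewrite Rabs_mult, (Rabs_right e) by lra.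
    pose proof (Lambda_1_near_0 c ltac:(lra)). nra.
Qed.

Section Substitution.
Variable e : R.
Hypothesis e_ge0 : 0 <= e.

Let B (z : R) := 1 - z ^ 2 + kappa * e * (1 - rpow z (p + 1)).
Let f (z : R) := rpow (B z) (-1/2).

Let B_factor z : B z = (1 - z) * (1 + z + kappa * e * power_quotient z).
Proof. unfold B. rewrite power_quotient_spec. ring. Qed.

Let B_pos z : 0 <= z < 1 -> 0 < B z.
Proof.
  intros Hz. rewrite B_factor. apply Rmult_lt_0_compat; [lra|].
  pose proof (power_quotient_bounds z ltac:(lra)). pose proof kappa_pos.
  assert (0 <= kappa * e * power_quotient z) by (apply Rmult_le_pos; [apply Rmult_le_pos|]; lra). lra.
Qed.

Let f_continuous z : 0 <= z < 1 -> continuous f z.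
Proof.
  intros Hz. apply continuity_pt_filterlim, (continuity_pt_comp B (fun x => rpow x (-1/2))).
  2: now apply continuity_pt_rpow_pos, B_pos.
  unfold B. apply continuity_pt_plus; [continuity_by_derive|].
  apply continuity_pt_mult; [apply continuity_pt_const; now intros a b|].
  apply continuity_pt_minus; [apply continuity_pt_const; now intros a b|].
  apply continuity_pt_rpow; lra.
Qed.

(* B (1 - u^2) = u^2 * Lambda_base e u, so the substitution z = 1 - u^2 cancels the
   singularity of the integrand at z = 1. *)
Let f_subst u : 0 < u <= 1 -> -2 * u * f (1 - u ^ 2) = - Lambda_integrand 0 e u.
Proof.
  intros Hu. unfold f. rewrite Lambda_integrand_0.
  assert (HB : B (1 - u ^ 2) = u ^ 2 * Lambda_base e u)
    by (rewrite B_factor; unfold Lambda_base; ring).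
  pose proof (Lambda_base_ge1 e u e_ge0 ltac:(lra)).
  rewrite HB, rpow_Rpower, <- Rpower_mult_distr, (Rpower_mhalf (u ^ 2)), sqrt_pow2 by nra.
  field. lra.
Qed.

Let RInt_f_partial b : 0 < b < 1 ->
  is_RInt f 0 b (RInt (Lambda_integrand 0 e) (sqrt (1 - b)) 1).
Proof.
  intros Hb. set (x0 := sqrt (1 - b)).
  assert (Hx0 : 0 < x0 < 1).
  { unfold x0. split; [apply sqrt_lt_R0; lra|].
    rewrite <- sqrt_1 at 2. apply sqrt_lt_1; lra. }
  assert (Hx0b : 1 - x0 ^ 2 = b) by (unfold x0; rewrite pow2_sqrt; lra).
  pose proof (is_RInt_comp f (fun y => 1 - y ^ 2) (fun y => -2 * y) x0 1) as Hc.
  rewrite Rmin_left, Rmax_right, Hx0b in Hc by lra.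
  replace (1 - 1 ^ 2) with 0 in Hc by ring.
  assert (Hex : ex_RInt f b 0).
  { apply (ex_RInt_continuous (V:=R_CompleteNormedModule)). intros z Hz.
    rewrite Rmin_right, Rmax_left in Hz by lra. apply f_continuous. lra. }
  assert (H1 : is_RInt (Lambda_integrand 0 e) x0 1 (opp (RInt f b 0))).
  { apply (is_RInt_ext (fun y => opp (scal (-2 * y) (f (1 - y ^ 2))))).
    - intros x Hx. rewrite Rmin_left, Rmax_right in Hx by lra.
      unfold opp, scal; simpl; unfold mult; simpl. rewrite f_subst by lra. ring.
    - apply (is_RInt_opp (V:=R_NormedModule)), Hc.
      + intros x Hx. apply f_continuous. nra.
      + intros x Hx. split; [auto_derive; [exact I | ring]|].
        apply (ex_derive_continuous (K:=R_AbsRing) (V:=R_NormedModule) (fun y => -2 * y)).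
        auto_derive. exact I. }
  rewrite (is_RInt_unique (V:=R_CompleteNormedModule) _ _ _ _ H1).
  apply (is_RInt_swap (V:=R_NormedModule)), (RInt_correct (V:=R_CompleteNormedModule)), Hex.
Qed.

Lemma is_RInt_gen_period_integrand :
  is_RInt_gen f (at_point 0) (at_left 1) (RInt (Lambda_integrand 0 e) 0 1).
Proof.
  intros P [eps HP].
  pose proof (cond_pos eps) as Heps.
  pose proof (Rmin_l 1 (eps * eps / 4)). pose proof (Rmin_r 1 (eps * eps / 4)).
  set (eta := Rmin 1 (eps * eps / 4)) in *.
  assert (Heta : 0 < eta) by (apply Rmin_pos; nra).
  apply (Filter_prod _ _ _ (fun a => a = 0) (fun b => 1 - eta < b < 1)); [reflexivity| |].
  { exists (mkposreal eta Heta). intros y Hy Hy1. simpl.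
    change (Rabs (y - 1) < eta) in Hy. apply Rabs_lt_between' in Hy. lra. }
  intros a b -> Hb.
  exists (RInt (Lambda_integrand 0 e) (sqrt (1 - b)) 1). split; [apply RInt_f_partial; lra|].
  apply HP. change (Rabs (RInt (Lambda_integrand 0 e) (sqrt (1 - b)) 1
                          - RInt (Lambda_integrand 0 e) 0 1) < eps).
  set (x0 := sqrt (1 - b)).
  assert (Hx0 : 0 <= x0 < eps / 2).
  { split; [apply sqrt_pos|]. unfold x0.
    rewrite <- (sqrt_pow2 (eps / 2)) by lra. apply sqrt_lt_1; nra. }
  assert (Hx1 : x0 <= 1)
    by (unfold x0; rewrite <- sqrt_1 at 2; apply sqrt_le_1_alt; lra).
  rewrite <- (RInt_Chasles (V:=R_CompleteNormedModule) _ 0 x0 1)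
    by (apply ex_RInt_Lambda_integrand; lra).
  change (plus ?a ?b) with (a + b).
  replace (RInt (Lambda_integrand 0 e) x0 1
           - (RInt (Lambda_integrand 0 e) 0 x0 + RInt (Lambda_integrand 0 e) x0 1))
    with (- RInt (Lambda_integrand 0 e) 0 x0) by ring.
  rewrite Rabs_Ropp.
  assert (Rabs (RInt (Lambda_integrand 0 e) 0 x0) <= (x0 - 0) * 2); [|lra].
  apply abs_RInt_le_const; [lra | apply ex_RInt_Lambda_integrand; lra|].
  intros t Ht. rewrite Lambda_integrand_0.
  pose proof (Lambda_base_ge1 e t e_ge0 ltac:(lra)).
  pose proof (Rpower_nonpos_le1 (-1/2) (Lambda_base e t) ltac:(lra) ltac:(lra)).
  pose proof (Rpower_pos (Lambda_base e t) (-1/2)). rewrite Rabs_right; lra.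
Qed.

End Substitution.

Lemma period_Lambda (N : R -> R) (c : R) : period p N c = Lambda 0 (rpow (N c) (p - 1)).
Proof.
  unfold period, Lambda. f_equal.
  apply (is_RInt_gen_unique (V:=R_CompleteNormedModule)).
  apply is_RInt_gen_period_integrand, rpow_ge0.
Qed.

Lemma period_range (N : R -> R) (c : R) : 0 < period p N c <= 2 * PI.
Proof. rewrite period_Lambda. apply Lambda_0_range, rpow_ge0. Qed.

Definition energy (x : R) := x ^ 2 + kappa * rpow x (p + 1).

Lemma energy_increasing x y : 0 <= x < y -> energy x < energy y.
Proof.
  intros Hxy. unfold energy. pose proof kappa_pos.
  assert (rpow x (p + 1) <= rpow y (p + 1)).
  { destruct (Req_dec x 0) as [->|Hx].
    - rewrite rpow_le0 by lra. apply rpow_ge0.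
    - rewrite !rpow_Rpower by lra. apply Rle_Rpower_l; lra. }
  nra.
Qed.

Lemma energy_inj x y : 0 <= x -> 0 <= y -> energy x = energy y -> x = y.
Proof.
  intros Hx Hy H. destruct (Rtotal_order x y) as [Hl|[He|Hg]]; auto.
  - pose proof (energy_increasing x y ltac:(lra)). lra.
  - pose proof (energy_increasing y x ltac:(lra)). lra.
Qed.

Section Amplitude.
Variable N : R -> R.
Hypothesis N_spec : forall c, 0 <= c -> 0 <= N c /\ energy (N c) = c.

Lemma period_preimage_unique s : 0 < s <= 2 * PI -> exists! c, 0 <= c /\ period p N c = s.
Proof.
  intros Hs. destruct (Lambda_0_onto s Hs) as [e [He HLe]].
  assert (Hp1 : 0 < p - 1) by lra.
  set (n := rpow e (1 / (p - 1))).
  assert (Hn : 0 <= n) by apply rpow_ge0.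
  assert (Hc : 0 <= energy n).
  { unfold energy. pose proof kappa_pos. pose proof (rpow_ge0 n (p + 1)). nra. }
  assert (HNc : N (energy n) = n)
    by (destruct (N_spec _ Hc) as [HN0 HNe]; now apply energy_inj).
  exists (energy n). split.
  - split; [exact Hc|]. rewrite period_Lambda, HNc. unfold n.
    rewrite rpow_rpow_inv; [exact HLe | exact He | apply Rdiv_lt_0_compat; lra | field; lra].
  - intros c' [Hc' Hp']. destruct (N_spec c' Hc') as [HN0' HNe'].
    rewrite period_Lambda in Hp'.
    assert (Heq : rpow (N c') (p - 1) = e) by (apply Lambda_0_inj; [apply rpow_ge0 | lra | lra]).
    rewrite <- HNe'. f_equal. unfold n. rewrite <- Heq.
    apply rpow_rpow_inv; [exact HN0' | exact Hp1 | field; lra].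
Qed.

Section Inverse.
Variable M : R -> R.
Hypothesis M_spec : forall s, 0 < s <= 2 * PI -> 0 <= M s /\ period p N (M s) = s.

Definition Lambda_0_inverse (s : R) := rpow (N (M s)) (p - 1).

Let E := Lambda_0_inverse.

Lemma Lambda_0_inverse_spec s : 0 < s <= 2 * PI -> 0 <= E s /\ Lambda 0 (E s) = s.
Proof.
  intros Hs. split; [apply rpow_ge0|].
  unfold E, Lambda_0_inverse. rewrite <- period_Lambda. apply M_spec, Hs.
Qed.

Lemma Lambda_0_inverse_pos s : 0 < s < 2 * PI -> 0 < E s.
Proof.
  intros Hs. destruct (Lambda_0_inverse_spec s ltac:(lra)) as [[H0|H0] H1]; [exact H0|].
  rewrite <- H0, Lambda_0_0 in H1. lra.
Qed.

Lemma is_derive_Lambda_0_inverse s : 0 < s < 2 * PI -> is_derive E s (/ Lambda 1 (E s)).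
Proof.
  intros Hs. pose proof (Lambda_0_inverse_pos s Hs).
  apply (is_derive_decreasing_inverse (Lambda 0) E 0 (2 * PI)); auto.
  - intros s' Hs'. split; [apply Lambda_0_inverse_spec; lra | now apply Lambda_0_inverse_pos].
  - exact Lambda_0_decreasing.
  - apply is_derive_Lambda. lra.
  - apply Rlt_not_eq, Lambda_1_neg. lra.
Qed.

Lemma Lambda_0_inverse_smooth (h : R -> R) : smooth_on (fun e => 0 < e) h ->
  smooth_on (fun s => 0 < s < 2 * PI) (fun s => h (E s)).
Proof.
  apply (smooth_on_comp_inverse _ _ E (Lambda 1)).
  - apply open_and; [apply open_gt | apply open_lt].
  - apply open_gt.
  - exact Lambda_0_inverse_pos.
  - apply (smooth_on_sub (fun e => -1/8 < e)); [intros; lra|].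
    apply (smooth_on_derive_chain _ (open_gt _) (fun j => Lambda (S j))).
    intros j x Hx. now apply is_derive_Lambda.
  - intros e He. apply Rlt_not_eq, Lambda_1_neg. lra.
  - exact is_derive_Lambda_0_inverse.
Qed.

(* Below e = slope_2pi / 48 the linear approximations of Lambda 0 and Lambda 1 at 0 are
   accurate to within half of their main terms. *)
Lemma Lambda_0_inverse_near_2pi : exists d, 0 < d /\ d <= 1 /\
  forall s, 2 * PI - d < s < 2 * PI ->
    0 < E s /\ E s < slope_2pi / 48 /\ E s <= 2 * (2 * PI - s) / slope_2pi.
Proof.
  pose proof slope_2pi_pos as Hk. pose proof PI2_3_2.
  assert (HL : Lambda 0 (slope_2pi / 48) < 2 * PI)
    by (rewrite <- Lambda_0_0; apply Lambda_0_decreasing; lra).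
  exists (Rmin 1 (2 * PI - Lambda 0 (slope_2pi / 48))).
  pose proof (Rmin_l 1 (2 * PI - Lambda 0 (slope_2pi / 48))).
  pose proof (Rmin_r 1 (2 * PI - Lambda 0 (slope_2pi / 48))).
  split; [apply Rmin_pos; lra|]. split; [lra|].
  intros s Hs. pose proof (Lambda_0_inverse_pos s ltac:(lra)) as HEp.
  destruct (Lambda_0_inverse_spec s ltac:(lra)) as [_ HEs].
  assert (HEe0 : E s < slope_2pi / 48).
  { destruct (Rlt_le_dec (E s) (slope_2pi / 48)) as [Hl|[Hlt|Heq]]; [exact Hl| |].
    - pose proof (Lambda_0_decreasing (slope_2pi / 48) (E s) ltac:(lra)). lra.
    - rewrite <- Heq in HEs. lra. }
  split; [exact HEp|]. split; [exact HEe0|].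
  pose proof (Lambda_0_near_0 (E s) ltac:(lra)) as Hq. rewrite HEs in Hq.
  apply Rabs_le_between in Hq.
  assert (24 * (E s * E s) <= slope_2pi / 2 * E s) by nra.
  apply (Rmult_le_reg_r slope_2pi); [exact Hk|].
  unfold Rdiv. rewrite Rmult_assoc, Rinv_l by lra. lra.
Qed.

Lemma asym_2pi_Lambda_0_inverse_lipschitz (H : R -> R) (h L : R) : 0 <= L ->
  (forall e, 0 < e < slope_2pi / 48 -> Rabs (H e - h) <= L * e) ->
  asym_2pi (fun s => H (E s)) h 0.
Proof.
  intros HL HH. destruct Lambda_0_inverse_near_2pi as [d [Hd [Hd1 Hr]]].
  pose proof slope_2pi_pos as Hk.
  exists (2 * L / slope_2pi), d. split; [apply Rmult_le_pos; [lra | left; now apply Rinv_0_lt_compat]|].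
  split; [exact Hd|]. split; [exact Hd1|].
  intros s Hs. destruct (Hr s Hs) as [HE0 [HE1 HE2]].
  rewrite Rpower_O, !Rmult_1_r by lra.
  eapply Rle_trans; [apply HH; lra|].
  replace (2 * L / slope_2pi * (2 * PI - s)) with (L * (2 * (2 * PI - s) / slope_2pi))
    by (field; lra).
  apply Rmult_le_compat_l; lra.
Qed.

Lemma asym_2pi_Lambda_0_inverse_bounded (H : R -> R) (B : R) :
  (forall e, 0 < e < slope_2pi / 48 -> Rabs (H e) <= B) -> asym_2pi (fun s => H (E s)) 0 (-1).
Proof.
  intros HH. apply asym_2pi_bounded. destruct Lambda_0_inverse_near_2pi as [d [Hd [_ Hr]]].
  exists B, d. split; [exact Hd|]. intros s Hs. destruct (Hr s Hs) as [? [? _]]. apply HH. lra.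
Qed.

Lemma asym_2pi_Lambda_0_inverse : asym_2pi E (/ slope_2pi) 1.
Proof.
  destruct Lambda_0_inverse_near_2pi as [d [Hd [Hd1 Hr]]]. pose proof slope_2pi_pos as Hk.
  exists (96 / slope_2pi ^ 3), d.
  split; [apply Rlt_le, Rdiv_lt_0_compat; [lra | apply pow_lt; lra]|].
  split; [exact Hd|]. split; [exact Hd1|].
  intros s Hs. destruct (Hr s Hs) as [HE0 [HE1 HE2]].
  set (t := 2 * PI - s) in *. assert (Ht : 0 < t) by (unfold t; lra).
  rewrite Rpower_1 by lra.
  destruct (Lambda_0_inverse_spec s ltac:(pose proof PI2_3_2; lra)) as [_ HEs].
  pose proof (Lambda_0_near_0 (E s) ltac:(lra)) as Hq. rewrite HEs in Hq. fold t in Hq.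
  replace (E s - / slope_2pi * t) with ((slope_2pi * E s - t) / slope_2pi) by (field; lra).
  unfold Rdiv. rewrite Rabs_mult, (Rabs_right (/ slope_2pi))
    by (apply Rle_ge, Rlt_le, Rinv_0_lt_compat; lra).
  apply (Rle_trans _ (24 * (E s * E s) * / slope_2pi)).
  { apply Rmult_le_compat_r; [left; apply Rinv_0_lt_compat; lra | exact Hq]. }
  assert (E s * E s <= (2 * t / slope_2pi) * (2 * t / slope_2pi))
    by (apply Rmult_le_compat; lra).
  apply (Rmult_le_reg_r slope_2pi); [lra|]. rewrite Rmult_assoc, Rinv_l, Rmult_1_r by lra.
  replace (96 * / slope_2pi ^ 3 * t * t * slope_2pi)
    with (24 * ((2 * t / slope_2pi) * (2 * t / slope_2pi))) by (field; lra).
  lra.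
Qed.

Lemma asym_2pi_inv_Lambda_1 : asym_2pi (fun s => / Lambda 1 (E s)) (- / slope_2pi) 0.
Proof.
  pose proof slope_2pi_pos as Hk.
  apply (asym_2pi_Lambda_0_inverse_lipschitz (fun e => / Lambda 1 e) _ (48 / slope_2pi ^ 2)).
  { apply Rlt_le, Rdiv_lt_0_compat; [lra | nra]. }
  intros e He. pose proof (Lambda_1_near_0 e ltac:(lra)) as HL.
  assert (HLb : Lambda 1 e <= - slope_2pi / 2) by (apply Rabs_le_between in HL; lra).
  replace (/ Lambda 1 e - - / slope_2pi) with ((Lambda 1 e + slope_2pi) / (Lambda 1 e * slope_2pi))
    by (field; lra).
  unfold Rdiv. rewrite Rabs_mult, Rabs_inv, Rabs_mult, (Rabs_left (Lambda 1 e)),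
    (Rabs_right slope_2pi) by lra.
  apply (Rle_trans _ (24 * e * / (slope_2pi / 2 * slope_2pi))).
  - apply Rmult_le_compat; [apply Rabs_pos | left; apply Rinv_0_lt_compat; nra | exact HL |].
    apply Rinv_le_contravar; nra.
  - right. field. lra.
Qed.

Lemma asym_2pi_Lambda_2 : asym_2pi (fun s => Lambda 2 (E s)) 0 (-1).
Proof.
  apply (asym_2pi_Lambda_0_inverse_bounded _ 24). intros e He. apply Lambda_2_bound. lra.
Qed.

Lemma M_eq s : 0 < s < 2 * PI ->
  M s = Rpower (E s) (2 / (p - 1)) * (1 + kappa * E s) /\
  sqrt (M s) = Rpower (E s) (1 / (p - 1)) * sqrt (1 + kappa * E s).
Proof.
  intros Hs. destruct (M_spec s ltac:(lra)) as [HM0 _].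
  destruct (N_spec (M s) HM0) as [Hn0 Hn].
  pose proof (Lambda_0_inverse_pos s Hs) as HE. unfold E, Lambda_0_inverse in *.
  set (n := N (M s)) in *.
  assert (Hnp : 0 < n) by (destruct Hn0 as [?| <-]; [auto | rewrite rpow_le0 in HE; lra]).
  rewrite rpow_Rpower, !Rpower_mult by exact Hnp.
  replace ((p - 1) * (2 / (p - 1))) with 2 by (field; lra).
  replace ((p - 1) * (1 / (p - 1))) with 1 by (field; lra).
  rewrite Rpower_2, Rpower_1 by exact Hnp.
  assert (HMs : M s = n ^ 2 * (1 + kappa * Rpower n (p - 1))).
  { rewrite <- Hn. unfold energy. rewrite rpow_Rpower by exact Hnp.
    replace (p + 1) with (2 + (p - 1)) by ring. rewrite Rpower_plus, Rpower_2 by exact Hnp. ring. }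
  split; [exact HMs|].
  rewrite HMs, sqrt_mult_alt, sqrt_pow2 by (try apply pow2_ge_0; lra). reflexivity.
Qed.

Lemma M_smooth n s : 0 < s < 2 * PI -> ex_derive_n M n s.
Proof.
  intros Hs. set (b := 2 / (p - 1)).
  assert (Hh : smooth_on (fun e => 0 < e) (fun e => Rpower e b * (1 + kappa * e))).
  { apply (smooth_on_ext _ (open_gt 0) (fun e => Rpower e b + kappa * Rpower e (b + 1))).
    - intros e He. rewrite Rpower_plus, Rpower_1 by exact He. ring.
    - intros m. apply (Cn_on_plus _ (open_gt 0)); [|apply Cn_on_scal]; apply smooth_on_Rpower. }
  assert (HM : smooth_on (fun s => 0 < s < 2 * PI) M).
  { apply (smooth_on_ext _ (open_and _ _ (open_gt 0) (open_lt _))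
                         (fun s => Rpower (E s) b * (1 + kappa * E s))).
    - intros x Hx. symmetry. exact (proj1 (M_eq x Hx)).
    - exact (Lambda_0_inverse_smooth _ Hh). }
  now apply (HM n n).
Qed.

Let L1_derive e : 0 < e -> is_derive (Lambda 1) e (Lambda 2 e).
Proof. intros He. apply is_derive_Lambda. lra. Qed.

Let L1_neq0 e : 0 < e -> Lambda 1 e <> 0.
Proof. intros He. apply Rlt_not_eq, Lambda_1_neg. lra. Qed.

Let pow_mul_Lambda_0_inverse_asym :=
  asym_2pi_pow_mul_E E (Lambda 1) (Lambda 2) slope_2pi slope_2pi_pos Lambda_0_inverse_pos
    is_derive_Lambda_0_inverse L1_derive L1_neq0 asym_2pi_Lambda_0_inverse
    asym_2pi_inv_Lambda_1 asym_2pi_Lambda_2.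

Definition alpha := Rpower (/ slope_2pi) (2 / (p - 1)).

Lemma asym_2pi_M :
  asym_2pi M alpha (2 / (p - 1)) /\
  asym_2pi (Derive M) (- (2 * alpha / (p - 1))) ((3 - p) / (p - 1)) /\
  asym_2pi (Derive_n M 2) (2 * alpha * (3 - p) / (p - 1) ^ 2) ((4 - 2 * p) / (p - 1)).
Proof.
  pose proof kappa_pos.
  assert (A0 : asym_2pi (fun s => 1 + kappa * E s) 1 0).
  { apply (asym_2pi_Lambda_0_inverse_lipschitz (fun e => 1 + kappa * e) _ kappa); [lra|].
    intros e He. replace (1 + kappa * e - 1) with (kappa * e) by ring.
    rewrite Rabs_right by nra. lra. }
  assert (A1 : asym_2pi (fun s => kappa) 0 (-1)).
  { apply (asym_2pi_Lambda_0_inverse_bounded (fun _ => kappa) kappa).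
    intros e He. rewrite Rabs_right; lra. }
  assert (A2 : asym_2pi (fun s => 0) 0 (-1)).
  { apply (asym_2pi_Lambda_0_inverse_bounded (fun _ => 0) 0).
    intros e He. rewrite Rabs_R0. lra. }
  assert (D0 : forall e, 0 < e -> is_derive (fun e => 1 + kappa * e) e kappa)
    by (intros e He; auto_derive; [exact I | ring]).
  assert (D1 : forall e, 0 < e -> is_derive (fun _ => kappa) e 0)
    by (intros e He; auto_derive; [exact I | ring]).
  destruct (pow_mul_Lambda_0_inverse_asym _ _ _ 1 (2 / (p - 1)) D0 D1 A0 A1 A2
              M (fun s Hs => proj1 (M_eq s Hs))) as [AM [ADM AD2M]].
  unfold alpha.
  repeat split; (eapply asym_2pi_eq; [eassumption | |]); field; lra.
Qed.

Lemma asym_2pi_sqrt_M :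
  asym_2pi (fun s => sqrt (M s)) (sqrt alpha) (1 / (p - 1)) /\
  asym_2pi (Derive (fun s => sqrt (M s))) (- (sqrt alpha / (p - 1))) ((2 - p) / (p - 1)) /\
  asym_2pi (Derive_n (fun s => sqrt (M s)) 2)
    (sqrt alpha * (2 - p) / (p - 1) ^ 2) ((3 - 2 * p) / (p - 1)).
Proof.
  pose proof kappa_pos.
  set (S e := sqrt (1 + kappa * e)).
  assert (HS : forall e, 0 <= e -> 1 <= S e <= 1 + kappa * e / 2 /\ S e * S e = 1 + kappa * e).
  { intros e He. unfold S. pose proof (sqrt_pos (1 + kappa * e)).
    assert (Hsq : sqrt (1 + kappa * e) * sqrt (1 + kappa * e) = 1 + kappa * e)
      by (apply sqrt_sqrt; nra).
    split; [split; nra | exact Hsq]. }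
  assert (D0 : forall e, 0 < e -> is_derive S e (kappa / (2 * S e))).
  { intros e He. destruct (HS e ltac:(lra)). unfold S in *. auto_derive; [nra | field; lra]. }
  assert (D1 : forall e, 0 < e ->
            is_derive (fun e => kappa / (2 * S e)) e (- (kappa * kappa) / (4 * (S e * S e * S e)))).
  { intros e He. destruct (HS e ltac:(lra)). unfold S in *.
    auto_derive; [repeat split; nra | field; lra]. }
  assert (A0 : asym_2pi (fun s => S (E s)) 1 0).
  { apply (asym_2pi_Lambda_0_inverse_lipschitz S _ (kappa / 2)); [lra|].
    intros e He. destruct (HS e ltac:(lra)). rewrite Rabs_right; lra. }
  assert (A1 : asym_2pi (fun s => kappa / (2 * S (E s))) 0 (-1)).
  { apply (asym_2pi_Lambda_0_inverse_bounded (fun e => kappa / (2 * S e)) (kappa / 2)).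
    intros e He. destruct (HS e ltac:(lra)).
    rewrite Rabs_right by (apply Rle_ge, Rdiv_le_0_compat; lra).
    apply Rmult_le_compat_l; [lra|]. apply Rinv_le_contravar; lra. }
  assert (A2 : asym_2pi (fun s => - (kappa * kappa) / (4 * (S (E s) * S (E s) * S (E s)))) 0 (-1)).
  { apply (asym_2pi_Lambda_0_inverse_bounded
             (fun e => - (kappa * kappa) / (4 * (S e * S e * S e))) (kappa * kappa / 4)).
    intros e He. destruct (HS e ltac:(lra)).
    assert (1 <= S e * S e * S e) by nra.
    unfold Rdiv. rewrite Rabs_mult, Rabs_Ropp, Rabs_inv, !Rabs_right by nra.
    apply Rmult_le_compat_l; [nra|]. apply Rinv_le_contravar; lra. }
  destruct (pow_mul_Lambda_0_inverse_asym _ _ _ 1 (1 / (p - 1)) D0 D1 A0 A1 A2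
              (fun s => sqrt (M s)) (fun s Hs => proj2 (M_eq s Hs))) as [AS [ADS AD2S]].
  replace (sqrt alpha) with (Rpower (/ slope_2pi) (1 / (p - 1))).
  - repeat split; (eapply asym_2pi_eq; [eassumption | |]); field; lra.
  - unfold alpha. rewrite sqrt_Rpower by (apply Rinv_0_lt_compat, slope_2pi_pos).
    f_equal. field. lra.
Qed.

End Inverse.
End Amplitude.
End Period.

Theorem lemma2p6 (p : R) (N : R -> R)
  (hp : 1 < p)
  (hN : forall c, 0 <= c -> 0 <= N c /\ N c ^ 2 + 2 / (p + 1) * rpow (N c) (p + 1) = c) :
  (* L is a bijection [0,oo) -> (0, 2π], so M = L^{-1} is well defined *)
  (forall c, 0 <= c -> 0 < period p N c <= 2 * PI) /\
  (forall s, 0 < s <= 2 * PI -> exists! c, 0 <= c /\ period p N c = s) /\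
  (forall M : R -> R,
     (forall s, 0 < s <= 2 * PI -> 0 <= M s /\ period p N (M s) = s) ->
     (forall n s, 0 < s < 2 * PI -> ex_derive_n M n s) /\
     exists alpha : R, 0 < alpha /\
       asympt_left_2pi M alpha (2 / (p - 1)) /\
       asympt_left_2pi (fun s => sqrt (M s)) (sqrt alpha) (1 / (p - 1)) /\
       asympt_left_2pi (fun s => Derive M s)
         (- (2 * alpha / (p - 1))) ((3 - p) / (p - 1)) /\
       asympt_left_2pi (fun s => Derive (fun x => sqrt (M x)) s)
         (- (sqrt alpha / (p - 1))) ((2 - p) / (p - 1)) /\
       asympt_left_2pi (fun s => Derive_n M 2 s)
         (2 * alpha * (3 - p) / (p - 1) ^ 2) ((4 - 2 * p) / (p - 1)) /\
       asympt_left_2pi (fun s => Derive_n (fun x => sqrt (M x)) 2 s)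
         (sqrt alpha * (2 - p) / (p - 1) ^ 2) ((3 - 2 * p) / (p - 1))).
Proof.
  split; [intros c _; exact (period_range p hp N c)|].
  split; [exact (period_preimage_unique p hp N hN)|].
  intros M HM. split; [exact (M_smooth p hp N hN M HM)|].
  exists (alpha p). split; [apply Rpower_pos|].
  destruct (asym_2pi_M p hp N hN M HM) as [A0 [A1 A2]].
  destruct (asym_2pi_sqrt_M p hp N hN M HM) as [B0 [B1 B2]].
  repeat split; apply asympt_left_2pi_asym_2pi; assumption.
Qed.
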